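(* $\operatorname{Proj}^-_\mathbb{R}\le_{\mathrm{W}}\operatorname{LLPO}*\lim$.
   Context: Represented spaces: a representation of a set $X$ is a partial surjection $\delta_X:\subseteq\mathbb{N}^\mathbb{N}\to X$. For a partial multi-valued function $f:\subseteq X\rightrightarrows Y$, a realizer is a partial $F:\subseteq\mathbb{N}^\mathbb{N}\to\mathbb{N}^\mathbb{N}$ with $\delta_Y(F(p))\in f(\delta_X(p))$ for all $p$ with $\delta_X(p)\in\mathrm{dom}(f)$. Weihrauch reducibility: $f\le_{\mathrm{W}} g$ iff there are computable partial $H:\subseteq\mathbb{N}^\mathbb{N}\times\mathbb{N}^\mathbb{N}\to\mathbb{N}^\mathbb{N}$ and $K:\subseteq\mathbb{N}^\mathbb{N}\to\mathbb{N}^\mathbb{N}$ such that $p\mapsto H(p,G(K(p)))$ is a realizer of $f$ for every realizer $G$ of $g$. The compositional product $g*f$ is the Weihrauch degree which is the maximum (it exists) of the degrees of $g_0\circ f_0$ over all $g_0\le_{\mathrm{W}}g$ and $f_0\le_{\mathrm{W}}f$ (with matching intermediate spaces); thus $h\le_{\mathrm{W}}g*f$ means $h\le_{\mathrm{W}}g_0\circ f_0$ for some such $g_0,f_0$. $\mathbb{R}$ has the Cauchy representation. $\mathcal{A}_-(\mathbb{R})$: closed subsets of $\mathbb{R}$, a name of $A$ being an enumeration of rational open intervals whose union is $\mathbb{R}\setminus A$. For $x\in\mathbb{R}$ and nonempty closed $A$, a projection point of $x$ onto $A$ is $y\in A$ with $|x-y|=d(x,A)$. $\operatorname{Proj}^-_\mathbb{R}:\subseteq\mathbb{R}\times\mathcal{A}_-(\mathbb{R})\rightrightarrows\mathbb{R}$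 maps $(x,A)$, $A\ne\emptyset$, to the set of projection points of $x$ onto $A$. $\operatorname{LLPO}:\subseteq\mathbb{N}^\mathbb{N}\times\mathbb{N}^\mathbb{N}\rightrightarrows\{0,1\}$: its domain consists of pairs $(p_0,p_1)$ such that there is at most one pair $(j,m)$ with $p_j(m)\ne0$, and $i\in\operatorname{LLPO}(p_0,p_1)$ iff $p_i=0^\mathbb{N}$. $\lim:\subseteq(\mathbb{N}^\mathbb{N})^\mathbb{N}\to\mathbb{N}^\mathbb{N}$ maps a convergent sequence in Baire space to its limit. *)

From Stdlib Require Import Reals QArith Qreals List Arith Cantor.
Open Scope R_scope.

Definition Baire := nat -> nat.

Definition npair (a b : nat) : nat := Cantor.to_nat (a, b).
Definition nunpair (n : nat) : nat * nat := Cantor.of_nat n.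

Fixpoint code_list (l : list nat) : nat :=
  match l with
  | nil => 0%nat
  | a :: l' => S (npair a (code_list l'))
  end.

Definition prefix (p : Baire) (k : nat) : list nat := map p (seq 0 k).

Definition bpair (p q : Baire) : Baire :=
  fun n => if Nat.even n then p (Nat.div2 n) else q (Nat.div2 n).
Definition bfst (r : Baire) : Baire := fun n => r (2 * n)%nat.
Definition bsnd (r : Baire) : Baire := fun n => r (S (2 * n)).

Inductive recf : Type :=
| RZero : recf
| RSucc : recf
| RProj : nat -> recf
| RComp : recf -> list recf -> recf
| RPrim : recf -> recf -> recf
| RMu   : recf -> recf.

Inductive reval : recf -> list nat -> nat -> Prop :=
| ev_zero xs : reval RZero xs 0
| ev_succ x xs : reval RSucc (x :: xs) (S x)
| ev_proj i xs v : nth_error xs i = Some v -> reval (RProj i) xs v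
| ev_comp f gs xs ys v :
    revals gs xs ys -> reval f ys v -> reval (RComp f gs) xs v
| ev_prim0 f g xs v : reval f xs v -> reval (RPrim f g) (0%nat :: xs) v
| ev_primS f g n xs u v :
    reval (RPrim f g) (n :: xs) u -> reval g (n :: u :: xs) v ->
    reval (RPrim f g) (S n :: xs) v
| ev_mu f xs n :
    reval f (n :: xs) 0 ->
    (forall m, (m < n)%nat -> exists k, reval f (m :: xs) (S k)) ->
    reval (RMu f) xs n
with revals : list recf -> list nat -> list nat -> Prop :=
| evs_nil xs : revals nil xs nil
| evs_cons g gs xs v vs :
    reval g xs v -> revals gs xs vs -> revals (g :: gs) xs (v :: vs).

Definition computable_nat (alpha : nat -> nat) : Prop :=
  exists r : recf, forall n, reval r (n :: nil) (alpha n).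

(* F_alpha(p) = q  iff for every n there is a least k with
   alpha <n, code(p|k)> > 0, and then q n = alpha <n, code(p|k)> - 1.
   A partial F :⊆ N^N -> N^N is computable iff F_alpha extends F for some
   computable alpha. *)
Definition assoc_eval (alpha : nat -> nat) (p q : Baire) : Prop :=
  forall n, exists k,
    alpha (npair n (code_list (prefix p k))) = S (q n) /\
    (forall j, (j < k)%nat -> alpha (npair n (code_list (prefix p j))) = 0%nat).

(* a representation of X: delta p x  means  delta_X(p) = x *)
Definition rep (X : Type) := Baire -> X -> Prop.

Definition is_rep {X : Type} (d : rep X) : Prop :=
  (forall p x y, d p x -> d p y -> x = y) /\ (forall x, exists p, d p x).

(* partial multi-valued function f :⊆ X ⇉ Y as its graph; dom f = {x | f(x) <> ∅} *)
Definition mvf (X Y : Type) := X -> Y -> Prop.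
Definition mdom {X Y} (f : mvf X Y) (x : X) : Prop := exists y, f x y.

(* composition of multi-valued functions:
   dom(g∘f) = {x ∈ dom f | f(x) ⊆ dom g},  (g∘f)(x) = g(f(x)) *)
Definition mcomp {X Y Z} (g : mvf Y Z) (f : mvf X Y) : mvf X Z :=
  fun x z => (forall y, f x y -> mdom g y) /\ exists y, f x y /\ g y z.

Record pfun := { pdom : Baire -> Prop; pval : Baire -> Baire }.

Definition realizer {X Y} (dX : rep X) (dY : rep Y) (f : mvf X Y) (G : pfun) : Prop :=
  forall p x, dX p x -> mdom f x ->
    pdom G p /\ exists y, dY (pval G p) y /\ f x y.

(* Weihrauch reducibility f <=_W g, where H :⊆ N^N x N^N -> N^N is computable
   (acting on the pairing <p,q>) and K :⊆ N^N -> N^N is computable. *)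
Definition WRed {X Y Z W} (dX : rep X) (dY : rep Y) (dZ : rep Z) (dW : rep W)
  (f : mvf X Y) (g : mvf Z W) : Prop :=
  exists aK aH : nat -> nat,
    computable_nat aK /\ computable_nat aH /\
    forall G : pfun, realizer dZ dW g G ->
      forall p x, dX p x -> mdom f x ->
        exists k r,
          assoc_eval aK p k /\ pdom G k /\
          assoc_eval aH (bpair p (pval G k)) r /\
          exists y, dY r y /\ f x y.

(* h <=_W g * f : h <=_W g0 ∘ f0 for some g0 <=_W g, f0 <=_W f
   with matching intermediate represented space. *)
Definition WRed_cprod {X Y A B C D} (dX : rep X) (dY : rep Y)
  (dA : rep A) (dB : rep B) (dC : rep C) (dD : rep D)
  (h : mvf X Y) (g : mvf C D) (f : mvf A B) : Prop :=
  exists (U V T : Type) (dU : rep U) (dV : rep V) (dT : rep T)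
         (f0 : mvf U V) (g0 : mvf V T),
    is_rep dU /\ is_rep dV /\ is_rep dT /\
    WRed dU dV dA dB f0 f /\
    WRed dV dT dC dD g0 g /\
    WRed dX dY dU dT h (mcomp g0 f0).

Definition rep_baire : rep Baire := fun p q => forall n, p n = q n.

Definition rep_prod {X Y} (dX : rep X) (dY : rep Y) : rep (X * Y) :=
  fun r xy => dX (bfst r) (fst xy) /\ dY (bsnd r) (snd xy).

Definition rep_baire_seq : rep (nat -> Baire) :=
  fun p s => forall n k, p (npair n k) = s n k.

Definition rep_bool : rep bool :=
  fun p b => p 0%nat = (if b then 1%nat else 0%nat).

Definition nat_to_Z (a : nat) : Z :=
  if Nat.even a then Z.of_nat (Nat.div2 a) else (- Z.of_nat (S (Nat.div2 a)))%Z.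
Definition nat_to_Q (n : nat) : Q :=
  let (a, b) := nunpair n in Qmake (nat_to_Z a) (Pos.of_succ_nat b).

Definition rep_cauchy : rep R :=
  fun p x => forall n, Rabs (Q2R (nat_to_Q (p n)) - x) <= / 2 ^ n.

Definition in_interval (k : nat) (x : R) : Prop :=
  let (a, b) := nunpair k in Q2R (nat_to_Q a) < x < Q2R (nat_to_Q b).

(* A_-(R): p enumerates rational open intervals (p(n) = 0: no interval,
   p(n) = k+1: interval coded by k) whose union is R \ A. *)
Definition rep_closed_neg : rep (R -> Prop) :=
  fun p A => forall x, ~ A x <-> exists n k, p n = S k /\ in_interval k x.

Definition Proj : mvf (R * (R -> Prop)) R :=
  fun xA y =>
    let (x, A) := xA in
    (exists z, A z) /\ A y /\ (forall z, A z -> Rabs (x - y) <= Rabs (x - z)).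

Definition LLPO : mvf (Baire * Baire) bool :=
  fun pp i =>
    let sel := fun j : bool => if j then snd pp else fst pp in
    (forall (j j' : bool) (m m' : nat),
        sel j m <> 0%nat -> sel j' m' <> 0%nat -> j = j' /\ m = m') /\
    (forall m, sel i m = 0%nat).

Definition lim : mvf (nat -> Baire) Baire :=
  fun s q => forall i, exists N, forall k, (N <= k)%nat -> s k i = q i.

From Stdlib Require Import Reals QArith List Arith.
From Stdlib Require Import Qreals Lia Lra Classical ClassicalEpsilon ZArith FunctionalExtensionality Cantor.
Import ListNotations.

(* Let [d] be the distance from [x] to [A]; one of [x - d] and [x + d] lies in [A] and is a
   projection point. For each precision [N], the least [j] such that the closed ball of
   radius [j 2^-N] around the [N]-th approximation of [x] meets [A] determines [d] up to
   [2^(1-N)]; it is the limit of the least [j] whose ball has not yet been certified to lie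
   in the union of the enumerated complement intervals, since by compactness every ball
   inside the complement is eventually certified. Hence a limit computation yields Cauchy
   names of both candidates together with two LLPO instances, instance [s] firing at the
   first stage at which the candidate on side [s] is certified to lie outside [A]. At most
   one side lies outside [A], so at most one instance fires, and LLPO picks a side whose
   candidate is a projection point. The stages are written as primitive recursive terms
   with oracle access to the input, which compile to mu-recursive Kleene associates. *)

Local Open Scope nat_scope.

(** * Terms with oracle access *)

Fixpoint rec_iter (z : nat) (st : nat -> nat -> nat) (k : nat) : nat :=
  match k with 0 => z | S k' => st k' (rec_iter z st k') end.

Lemma rec_iter_ext z st1 st2 n :
  (forall i a, st1 i a = st2 i a) -> rec_iter z st1 n = rec_iter z st2 n.
Proof. intros H; induction n; simpl; congruence. Qed.

Inductive term : Type :=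
| TVar (i : nat)
| TConst (c : nat)
| TAdd (a b : term) | TSub (a b : term) | TMul (a b : term)
| TIf (c a b : term)
| TLt (a b : term)
| TRec (n z s : term)
| TLet (a b : term)
| TOrc (t : term).

Fixpoint teval (f : nat -> nat) (env : list nat) (e : term) : nat :=
  match e with
  | TVar i => nth i env 0
  | TConst c => c
  | TAdd a b => teval f env a + teval f env b
  | TSub a b => teval f env a - teval f env b
  | TMul a b => teval f env a * teval f env b
  | TIf c a b => if teval f env c =? 0 then teval f env b else teval f env a
  | TLt a b => if teval f env a <? teval f env b then 1 else 0
  | TRec n z s => rec_iter (teval f env z) (fun i acc => teval f (i :: acc :: env) s) (teval f env n)
  | TLet a b => teval f (teval f env a :: env) b
  | TOrc t => f (teval f env t)
  end.

Fixpoint scoped (b : nat) (e : term) : bool :=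
  match e with
  | TVar i => i <? b
  | TConst _ => true
  | TAdd x y | TSub x y | TMul x y | TLt x y => scoped b x && scoped b y
  | TIf c x y => scoped b c && scoped b x && scoped b y
  | TRec n z s => scoped b n && scoped b z && scoped (S (S b)) s
  | TLet a c => scoped b a && scoped (S b) c
  | TOrc t => scoped b t
  end.

Ltac split_scoped :=
  repeat match goal with H : (_ && _) = true |- _ => apply andb_prop in H; destruct H end.

Lemma teval_scoped f : forall e env1 env2, scoped (length env1) e = true ->
  teval f (env1 ++ env2) e = teval f env1 e.
Proof.
  induction e; intros env1 env2 H; cbn [scoped teval] in *; split_scoped;
    try (rewrite ?IHe, ?IHe1, ?IHe2, ?IHe3 by auto; reflexivity).
  - apply Nat.ltb_lt in H. rewrite app_nth1 by exact H. reflexivity.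
  - rewrite IHe1, IHe2 by auto. apply rec_iter_ext. intros i a. apply (IHe3 (i :: a :: env1)). simpl; auto.
  - rewrite IHe1 by auto. apply (IHe2 (_ :: env1)). auto.
Qed.

Fixpoint shift (d c : nat) (e : term) : term :=
  match e with
  | TVar i => if i <? c then TVar i else TVar (i + d)
  | TConst n => TConst n
  | TAdd a b => TAdd (shift d c a) (shift d c b)
  | TSub a b => TSub (shift d c a) (shift d c b)
  | TMul a b => TMul (shift d c a) (shift d c b)
  | TIf x a b => TIf (shift d c x) (shift d c a) (shift d c b)
  | TLt a b => TLt (shift d c a) (shift d c b)
  | TRec n z s => TRec (shift d c n) (shift d c z) (shift d (S (S c)) s)
  | TLet a b => TLet (shift d c a) (shift d (S c) b)
  | TOrc t => TOrc (shift d c t)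
  end.

Lemma teval_shift f : forall e pre mid env,
  teval f (pre ++ mid ++ env) (shift (length mid) (length pre) e) = teval f (pre ++ env) e.
Proof.
  induction e; intros pre mid env; cbn [shift teval];
    try (rewrite ?IHe, ?IHe1, ?IHe2, ?IHe3; reflexivity).
  - destruct (i <? length pre) eqn:E; cbn [teval].
    + apply Nat.ltb_lt in E. rewrite !app_nth1 by auto. reflexivity.
    + apply Nat.ltb_ge in E.
      rewrite (app_nth2 pre (mid ++ env)), (app_nth2 mid env), (app_nth2 pre env) by lia.
      f_equal. lia.
  - rewrite IHe1, IHe2. apply rec_iter_ext. intros i a. apply (IHe3 (i :: a :: pre)).
  - rewrite IHe1. apply (IHe2 (_ :: pre)).
Qed.

Lemma teval_shift11 f e i a env : teval f (i :: a :: env) (shift 1 1 e) = teval f (i :: env) e.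
Proof. apply (teval_shift f e [i] [a] env). Qed.

Fixpoint lets (args : list term) (d : nat) (body : term) : term :=
  match args with [] => body | a :: r => TLet (shift d 0 a) (lets r (S d) body) end.

Lemma teval_lets f body : forall args acc env,
  teval f (acc ++ env) (lets args (length acc) body) =
  teval f (rev (map (teval f env) args) ++ acc ++ env) body.
Proof.
  induction args as [|a args IH]; intros acc env; cbn [lets teval]; [reflexivity|].
  pose proof (teval_shift f a [] acc env) as Hs. cbn [app length] in Hs. rewrite Hs.
  pose proof (IH (teval f env a :: acc) env) as H. cbn [app length] in H. rewrite H.
  cbn [map rev]. rewrite <- app_assoc. reflexivity.
Qed.

Definition Call (body : term) (args : list term) : term := lets (rev args) 0 body.

Lemma teval_Call f body args env : scoped (length args) body = true ->
  teval f env (Call body args) = teval f (map (teval f env) args) body.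
Proof.
  intros H. unfold Call. pose proof (teval_lets f body (rev args) [] env) as H2.
  cbn [app length] in H2. rewrite H2, map_rev, rev_involutive.
  apply teval_scoped. rewrite length_map. exact H.
Qed.

Ltac simpl_call := repeat (first [rewrite teval_Call by reflexivity | progress cbn [map teval nth]]).

Definition least_below (P : nat -> bool) (N : nat) : nat :=
  rec_iter 0 (fun i acc => if acc <? i then acc else if P i then i else S i) N.

Lemma least_below_spec P N :
  least_below P N <= N /\ (forall i, i < least_below P N -> P i = false) /\
  (least_below P N < N -> P (least_below P N) = true).
Proof.
  induction N as [|N IH]; [cbn; split; [lia | split; intros; lia]|].
  change (least_below P (S N)) with
    (if least_below P N <? N then least_below P N else if P N then N else S N).
  destruct IH as (H1 & H2 & H3). set (r := least_below P N) in *.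
  destruct (r <? N) eqn:E.
  - apply Nat.ltb_lt in E. repeat split; auto; lia.
  - apply Nat.ltb_ge in E. assert (r = N) as -> by lia.
    destruct (P N) eqn:EP; repeat split; auto; try lia.
    intros i Hi. destruct (Nat.eq_dec i N) as [->|]; auto. apply H2. lia.
Qed.

Lemma least_below_eq P N J : J < N -> P J = true -> (forall i, i < J -> P i = false) ->
  least_below P N = J.
Proof.
  intros HJ PJ Hlt. destruct (least_below_spec P N) as (H1 & H2 & H3).
  destruct (lt_eq_lt_dec (least_below P N) J) as [[E|E]|E]; auto.
  - rewrite Hlt in H3 by exact E. discriminate H3. lia.
  - rewrite H2 in PJ by exact E. discriminate.
Qed.

Lemma least_below_ext P Q N : (forall i, P i = Q i) -> least_below P N = least_below Q N.
Proof. intros H. apply rec_iter_ext. intros. rewrite H. reflexivity. Qed.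

Lemma negb_eqb0_b2n (b : bool) : negb ((if b then 1 else 0) =? 0) = b.
Proof. destruct b; reflexivity. Qed.

Definition tleast (n P : term) : term :=
  TRec n (TConst 0)
    (TIf (TLt (TVar 1) (TVar 0)) (TVar 1) (TIf (shift 1 1 P) (TVar 0) (TAdd (TVar 0) (TConst 1)))).

Lemma teval_tleast f env n P :
  teval f env (tleast n P) = least_below (fun i => negb (teval f (i :: env) P =? 0)) (teval f env n).
Proof.
  apply rec_iter_ext. intros i a. cbn [teval nth]. rewrite teval_shift11.
  destruct (a <? i); auto. destruct (teval f (i :: env) P =? 0); cbn; lia.
Qed.

Definition texists_lt (n P : term) : term :=
  TRec n (TConst 0) (TIf (TVar 1) (TConst 1) (TIf (shift 1 1 P) (TConst 1) (TConst 0))).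

Lemma teval_texists_lt f env n P :
  teval f env (texists_lt n P) <> 0 <-> exists i, i < teval f env n /\ teval f (i :: env) P <> 0.
Proof.
  cbn [texists_lt teval].
  erewrite rec_iter_ext; [| intros i a; cbn [nth]; rewrite teval_shift11; reflexivity].
  generalize (teval f env n) as N. induction N as [|N IH]; cbn [rec_iter nth].
  - split; [congruence | intros [i [Hi _]]; lia].
  - destruct (rec_iter _ _ N =? 0) eqn:E.
    + apply Nat.eqb_eq in E. rewrite E in IH.
      destruct (teval f (N :: env) P =? 0) eqn:E2.
      * apply Nat.eqb_eq in E2. split; [congruence|]. intros [i [Hi Pi]].
        destruct (Nat.eq_dec i N) as [->|]; [congruence|].
        apply IH. exists i. split; auto. lia.
      * apply Nat.eqb_neq in E2. split; auto. intros _. exists N. auto.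
    + apply Nat.eqb_neq in E. split; auto. intros _.
      destruct (proj1 IH E) as [i [Hi Pi]]. exists i. auto.
Qed.

Definition tforall_lt (n P : term) : term :=
  TRec n (TConst 1) (TIf (TVar 1) (TIf (shift 1 1 P) (TConst 1) (TConst 0)) (TConst 0)).

Lemma teval_tforall_lt f env n P :
  teval f env (tforall_lt n P) <> 0 <-> forall i, i < teval f env n -> teval f (i :: env) P <> 0.
Proof.
  cbn [tforall_lt teval].
  erewrite rec_iter_ext; [| intros i a; cbn [nth]; rewrite teval_shift11; reflexivity].
  generalize (teval f env n) as N. induction N as [|N IH]; cbn [rec_iter nth].
  - split; [intros _ i Hi; lia | congruence].
  - destruct (rec_iter _ _ N =? 0) eqn:E.
    + apply Nat.eqb_eq in E. rewrite E in IH. split; [congruence|].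
      intros H. exfalso. apply (proj2 IH); [|reflexivity]. intros i Hi. apply H. lia.
    + apply Nat.eqb_neq in E. destruct (teval f (N :: env) P =? 0) eqn:E2.
      * apply Nat.eqb_eq in E2. split; [congruence|]. intros H. exfalso. apply (H N); auto.
      * apply Nat.eqb_neq in E2. split; auto. intros _ i Hi.
        destruct (Nat.eq_dec i N) as [->|]; auto. apply (proj1 IH E). lia.
Qed.

Definition tand (a b : term) : term := TIf a (TIf b (TConst 1) (TConst 0)) (TConst 0).

Lemma teval_tand f env a b :
  teval f env (tand a b) <> 0 <-> teval f env a <> 0 /\ teval f env b <> 0.
Proof.
  cbn [tand teval]. destruct (teval f env a =? 0) eqn:E1, (teval f env b =? 0) eqn:E2;
    rewrite ?Nat.eqb_eq, ?Nat.eqb_neq in *; split; intros; try tauto; try congruence; lia.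
Qed.

Lemma teval_tand_01 f env a b : teval f env (tand a b) = 0 \/ teval f env (tand a b) = 1.
Proof. cbn [tand teval]. destruct (_ =? 0); [|destruct (_ =? 0)]; auto. Qed.

Definition tnot (a : term) : term := TIf a (TConst 0) (TConst 1).

Lemma teval_tnot f env a : teval f env (tnot a) <> 0 <-> teval f env a = 0.
Proof.
  cbn [tnot teval]. destruct (teval f env a =? 0) eqn:E;
    rewrite ?Nat.eqb_eq, ?Nat.eqb_neq in *; split; intros; congruence.
Qed.

Definition tri (t : nat) : nat := rec_iter 0 (fun i acc => i + 1 + acc) t.

Lemma tri_S t : tri (S t) = S t + tri t.
Proof. unfold tri; simpl. lia. Qed.

Lemma npair_tri x y : npair x y = y + tri (y + x).
Proof.
  unfold npair, Cantor.to_nat. f_equal. generalize (y + x). intros n.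
  induction n as [|n IH]; [reflexivity|]. rewrite tri_S, <- IH. reflexivity.
Qed.

Definition diag (n : nat) : nat := least_below (fun t => n <? tri (S t)) (S n).

Lemma diag_spec n : tri (diag n) <= n < tri (S (diag n)).
Proof.
  destruct (least_below_spec (fun t => n <? tri (S t)) (S n)) as (H1 & H2 & H3).
  fold (diag n) in *.
  assert (Hlt : diag n < S n).
  { destruct (Nat.eq_dec (diag n) (S n)) as [E|]; [|lia].
    specialize (H2 n). rewrite E in H2. specialize (H2 (Nat.lt_succ_diag_r n)).
    apply Nat.ltb_ge in H2. rewrite tri_S in H2. lia. }
  specialize (H3 Hlt). apply Nat.ltb_lt in H3. split; auto.
  destruct (diag n) as [|d] eqn:E; [cbn; lia|].
  specialize (H2 d ltac:(lia)). apply Nat.ltb_ge in H2. auto.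
Qed.

Lemma nunpair_diag n : nunpair n = (diag n - (n - tri (diag n)), n - tri (diag n)).
Proof.
  unfold nunpair. destruct (diag_spec n) as [H1 H2]. rewrite tri_S in H2.
  rewrite <- (Cantor.cancel_of_to (diag n - (n - tri (diag n)), n - tri (diag n))).
  f_equal. fold (npair (diag n - (n - tri (diag n))) (n - tri (diag n))).
  rewrite npair_tri.
  replace (n - tri (diag n) + (diag n - (n - tri (diag n)))) with (diag n) by lia. lia.
Qed.

Lemma nunpair_npair a b : nunpair (npair a b) = (a, b).
Proof. apply Cantor.cancel_of_to. Qed.

Definition t_tri : term := TRec (TVar 0) (TConst 0) (TAdd (TAdd (TVar 0) (TConst 1)) (TVar 1)).

Lemma teval_t_tri f t : teval f [t] t_tri = tri t.
Proof. reflexivity. Qed.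

Definition t_diag : term :=
  tleast (TAdd (TVar 0) (TConst 1)) (TLt (TVar 1) (Call t_tri [TAdd (TVar 0) (TConst 1)])).

Lemma teval_t_diag f n : teval f [n] t_diag = diag n.
Proof.
  unfold t_diag. rewrite teval_tleast. cbn [teval nth]. rewrite Nat.add_1_r.
  apply least_below_ext. intros i. simpl_call.
  rewrite Nat.add_1_r, teval_t_tri. apply negb_eqb0_b2n.
Qed.

Definition t_snd : term := TSub (TVar 0) (Call t_tri [Call t_diag [TVar 0]]).
Definition t_fst : term := TSub (Call t_diag [TVar 0]) (Call t_snd [TVar 0]).

Lemma teval_t_snd f n : teval f [n] t_snd = snd (nunpair n).
Proof. unfold t_snd. simpl_call. rewrite teval_t_diag, teval_t_tri, nunpair_diag. reflexivity. Qed.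

Lemma teval_t_fst f n : teval f [n] t_fst = fst (nunpair n).
Proof. unfold t_fst. simpl_call. rewrite teval_t_diag, teval_t_snd, nunpair_diag. reflexivity. Qed.

Definition t_pair : term := TAdd (TVar 1) (Call t_tri [TAdd (TVar 1) (TVar 0)]).

Lemma teval_t_pair f a b : teval f [a; b] t_pair = npair a b.
Proof. unfold t_pair. simpl_call. rewrite npair_tri. reflexivity. Qed.

Definition t_div2 : term :=
  tleast (TAdd (TVar 0) (TConst 1)) (TLt (TVar 1) (TAdd (TMul (TConst 2) (TVar 0)) (TConst 2))).

Lemma teval_t_div2 f a : teval f [a] t_div2 = Nat.div2 a.
Proof.
  unfold t_div2. rewrite teval_tleast. cbn [teval nth].
  pose proof (Nat.div2_odd a) as Ha.
  apply least_below_eq; [| rewrite negb_eqb0_b2n, Nat.ltb_lt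
                         | intros i Hi; rewrite negb_eqb0_b2n; apply Nat.ltb_ge];
    destruct (Nat.odd a); cbn in *; lia.
Qed.

Definition t_even : term :=
  TIf (TSub (TVar 0) (TMul (TConst 2) (Call t_div2 [TVar 0]))) (TConst 0) (TConst 1).

Lemma teval_t_even f a : teval f [a] t_even = if Nat.even a then 1 else 0.
Proof.
  unfold t_even. simpl_call. rewrite teval_t_div2.
  pose proof (Nat.div2_odd a). rewrite <- Nat.negb_odd.
  destruct (Nat.odd a); cbn in *.
  - replace (a - (Nat.div2 a + (Nat.div2 a + 0))) with 1 by lia. reflexivity.
  - replace (a - (Nat.div2 a + (Nat.div2 a + 0))) with 0 by lia. reflexivity.
Qed.

Definition t_pow2 : term := TRec (TVar 0) (TConst 1) (TAdd (TVar 1) (TVar 1)).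

Lemma teval_t_pow2 f n : teval f [n] t_pow2 = 2 ^ n.
Proof.
  cbn [t_pow2 teval nth]. induction n as [|n IH]; cbn [rec_iter]; [reflexivity|].
  rewrite IH. cbn. lia.
Qed.

Definition code_tail (c : nat) : nat := match c with 0 => 0 | S c' => snd (nunpair c') end.
Definition code_drop (t c : nat) : nat := rec_iter c (fun _ acc => code_tail acc) t.
Definition code_lookup (c x : nat) : nat :=
  match code_drop x c with 0 => 0 | S d => S (fst (nunpair d)) end.

Lemma code_tail_list l : code_tail (code_list l) = code_list (tl l).
Proof.
  destruct l as [|a l]; [reflexivity|].
  change (snd (nunpair (npair a (code_list l))) = code_list l). now rewrite nunpair_npair.
Qed.

Lemma code_drop_list x l : code_drop x (code_list l) = code_list (skipn x l).
Proof.
  induction x as [|x IH]; [reflexivity|].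
  change (code_drop (S x) (code_list l)) with (code_tail (code_drop x (code_list l))).
  rewrite IH, code_tail_list. f_equal.
  change (S x) with (1 + x). rewrite <- skipn_skipn. now destruct (skipn x l).
Qed.

Lemma code_lookup_prefix (p : Baire) k x :
  code_lookup (code_list (prefix p k)) x = if x <? k then S (p x) else 0.
Proof.
  unfold code_lookup, prefix. rewrite code_drop_list, skipn_map, skipn_seq.
  destruct (x <? k) eqn:E.
  - apply Nat.ltb_lt in E. destruct (k - x) as [|n] eqn:E2; [lia|].
    cbn [seq map code_list]. now rewrite nunpair_npair.
  - apply Nat.ltb_ge in E. now replace (k - x) with 0 by lia.
Qed.

Definition t_tail : term := TIf (TVar 0) (Call t_snd [TSub (TVar 0) (TConst 1)]) (TConst 0).
Definition t_drop : term := TRec (TVar 0) (TVar 1) (Call t_tail [TVar 1]).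
Definition t_lookup : term :=
  TLet (Call t_drop [TVar 0; TVar 1])
    (TIf (TVar 0) (TAdd (Call t_fst [TSub (TVar 0) (TConst 1)]) (TConst 1)) (TConst 0)).

Lemma teval_t_lookup f x c : teval f [x; c] t_lookup = code_lookup c x.
Proof.
  assert (Htail : forall c, teval f [c] t_tail = code_tail c).
  { intros [|c']; unfold t_tail; simpl_call; [reflexivity|].
    cbn [Nat.eqb]. replace (S c' - 1) with c' by lia. apply teval_t_snd. }
  assert (Hdrop : teval f [x; c] t_drop = code_drop x c).
  { apply rec_iter_ext. intros i a. simpl_call. apply Htail. }
  unfold t_lookup, code_lookup. simpl_call. rewrite Hdrop.
  destruct (code_drop x c) as [|d]; simpl_call; [reflexivity|].
  cbn [Nat.eqb]. replace (S d - 1) with d by lia. rewrite teval_t_fst. lia.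
Qed.

(** * Compilation to mu-recursive functions *)

Fixpoint rconst (c : nat) : recf :=
  match c with 0 => RZero | S c' => RComp RSucc [rconst c'] end.
Definition rplus : recf := RPrim (RProj 0) (RComp RSucc [RProj 1]).
Definition rpred : recf := RPrim RZero (RProj 0).
Definition rsub : recf := RPrim (RProj 0) (RComp rpred [RProj 1]).
Definition rmul : recf := RPrim RZero (RComp rplus [RProj 1; RProj 2]).
Definition rprojs (k : nat) : list recf := map RProj (seq 0 k).

Lemma reval_rconst c xs : reval (rconst c) xs c.
Proof.
  induction c as [|c IH]; cbn; [constructor|].
  econstructor; [repeat constructor; exact IH | repeat constructor].
Qed.

Lemma reval_rplus x y : reval rplus [x; y] (x + y).
Proof.
  induction x as [|x IH]; [repeat constructor|].
  eapply ev_primS; [exact IH|]. repeat econstructor.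
Qed.

Lemma reval_rpred x : reval rpred [x] (pred x).
Proof. induction x as [|x IH]; [repeat constructor|]. eapply ev_primS; [exact IH | now constructor]. Qed.

Lemma reval_rsub y x : reval rsub [y; x] (x - y).
Proof.
  induction y as [|y IH].
  - rewrite Nat.sub_0_r. repeat constructor.
  - eapply ev_primS; [exact IH|]. econstructor; [repeat econstructor|].
    replace (x - S y) with (pred (x - y)) by lia. apply reval_rpred.
Qed.

Lemma reval_rmul x y : reval rmul [x; y] (x * y).
Proof.
  induction x as [|x IH]; [repeat constructor|].
  eapply ev_primS; [exact IH|]. econstructor; [repeat econstructor|].
  replace (S x * y) with (x * y + y) by lia. apply reval_rplus.
Qed.

Lemma revals_projs_from l pre :
  revals (map RProj (seq (length pre) (length l))) (pre ++ l) l.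
Proof.
  revert pre. induction l as [|a l IH]; intros pre; cbn; constructor.
  - constructor. rewrite nth_error_app2, Nat.sub_diag by lia. reflexivity.
  - specialize (IH (pre ++ [a])). rewrite <- app_assoc, length_app, Nat.add_1_r in IH. exact IH.
Qed.

Lemma revals_rprojs env : revals (rprojs (length env)) env env.
Proof. apply (revals_projs_from env []). Qed.

Lemma reval_comp1 f g xs a v : reval g xs a -> reval f [a] v -> reval (RComp f [g]) xs v.
Proof. intros. econstructor; [repeat constructor; eauto | eauto]. Qed.

Lemma reval_comp2 f g1 g2 xs a b v :
  reval g1 xs a -> reval g2 xs b -> reval f [a; b] v -> reval (RComp f [g1; g2]) xs v.
Proof. intros. econstructor; [repeat constructor; eauto | eauto]. Qed.

Lemma reval_comp3 f g1 g2 g3 xs a b c v :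
  reval g1 xs a -> reval g2 xs b -> reval g3 xs c -> reval f [a; b; c] v ->
  reval (RComp f [g1; g2; g3]) xs v.
Proof. intros. econstructor; [repeat constructor; eauto | eauto]. Qed.

Definition noorc : nat -> nat := fun _ => 0.

(* Oracle queries compile to [0]; [compile] is only applied to oracle-free terms. *)
Fixpoint compile (k : nat) (e : term) : recf :=
  match e with
  | TVar i => if i <? k then RProj i else RZero
  | TConst c => rconst c
  | TAdd a b => RComp rplus [compile k a; compile k b]
  | TSub a b => RComp rsub [compile k b; compile k a]
  | TMul a b => RComp rmul [compile k a; compile k b]
  | TIf c a b =>
      let not_c := RComp rsub [compile k c; rconst 1] in
      let sg_c := RComp rsub [not_c; rconst 1] in
      RComp rplus [RComp rmul [compile k a; sg_c]; RComp rmul [compile k b; not_c]]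
  | TLt a b => RComp rsub [RComp rsub [compile k b; RComp RSucc [compile k a]]; rconst 1]
  | TRec n z s => RComp (RPrim (compile k z) (compile (S (S k)) s)) (compile k n :: rprojs k)
  | TLet a b => RComp (compile (S k) b) (compile k a :: rprojs k)
  | TOrc _ => RZero
  end.

Lemma reval_compile e env : reval (compile (length env) e) env (teval noorc env e).
Proof.
  revert env. induction e; intros env; cbn [compile teval].
  - destruct (i <? length env) eqn:E.
    + apply Nat.ltb_lt in E. constructor. now apply nth_error_nth'.
    + apply Nat.ltb_ge in E. rewrite nth_overflow by exact E. constructor.
  - apply reval_rconst.
  - eapply reval_comp2; eauto. apply reval_rplus.
  - eapply reval_comp2; eauto. apply reval_rsub.
  - eapply reval_comp2; eauto. apply reval_rmul.
  - replace (if teval noorc env e1 =? 0 then teval noorc env e3 else teval noorc env e2)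
      with (teval noorc env e2 * (1 - (1 - teval noorc env e1)) +
            teval noorc env e3 * (1 - teval noorc env e1))
      by (destruct (teval noorc env e1); cbn; lia).
    eapply reval_comp2; [ | | apply reval_rplus].
    + eapply reval_comp2; [apply IHe2 | | apply reval_rmul].
      eapply reval_comp2; [ | apply (reval_rconst 1) | apply reval_rsub].
      eapply reval_comp2; [apply IHe1 | apply (reval_rconst 1) | apply reval_rsub].
    + eapply reval_comp2; [apply IHe3 | | apply reval_rmul].
      eapply reval_comp2; [apply IHe1 | apply (reval_rconst 1) | apply reval_rsub].
  - replace (if teval noorc env e1 <? teval noorc env e2 then 1 else 0)
      with (1 - (S (teval noorc env e1) - teval noorc env e2))
      by (destruct (Nat.ltb_spec (teval noorc env e1) (teval noorc env e2)); lia).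
    eapply reval_comp2; [ | apply (reval_rconst 1) | apply reval_rsub].
    eapply reval_comp2; [apply IHe2 | | apply reval_rsub].
    eapply reval_comp1; [apply IHe1 | constructor].
  - econstructor; [constructor; [apply IHe1 | apply revals_rprojs]|].
    generalize (teval noorc env e1) as N. induction N as [|N IHN]; cbn.
    + apply ev_prim0. apply IHe2.
    + eapply ev_primS; [exact IHN | apply (IHe3 (N :: _ :: env))].
  - econstructor; [constructor; [apply IHe1 | apply revals_rprojs] | apply (IHe2 (_ :: env))].
  - constructor.
Qed.

(** * Evaluation on finite prefixes and Kleene associates *)

Fixpoint rec_opt (z : option nat) (st : nat -> nat -> option nat) (k : nat) : option nat :=
  match k with
  | 0 => z
  | S k' => match rec_opt z st k' with None => None | Some a => st k' a end
  end.

Definition obind2 (x y : option nat) (h : nat -> nat -> nat) : option nat :=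
  match x, y with Some a, Some b => Some (h a b) | _, _ => None end.

Fixpoint tevalp (g : nat -> option nat) (env : list nat) (e : term) : option nat :=
  match e with
  | TVar i => Some (nth i env 0)
  | TConst c => Some c
  | TAdd a b => obind2 (tevalp g env a) (tevalp g env b) Nat.add
  | TSub a b => obind2 (tevalp g env a) (tevalp g env b) Nat.sub
  | TMul a b => obind2 (tevalp g env a) (tevalp g env b) Nat.mul
  | TIf c a b => match tevalp g env c with
                 | None => None
                 | Some x => if x =? 0 then tevalp g env b else tevalp g env a end
  | TLt a b => obind2 (tevalp g env a) (tevalp g env b) (fun x y => if x <? y then 1 else 0)
  | TRec n z s => match tevalp g env n with
                  | None => None
                  | Some N => rec_opt (tevalp g env z) (fun i acc => tevalp g (i :: acc :: env) s) N
                  end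
  | TLet a b => match tevalp g env a with None => None | Some x => tevalp g (x :: env) b end
  | TOrc t => match tevalp g env t with None => None | Some x => g x end
  end.

Definition enc (o : option nat) : nat := match o with None => 0 | Some v => S v end.

Definition t_strict2 (op : term -> term -> term) : term :=
  TIf (TVar 0)
    (TIf (TVar 1) (TAdd (op (TSub (TVar 0) (TConst 1)) (TSub (TVar 1) (TConst 1))) (TConst 1)) (TConst 0))
    (TConst 0).

Lemma teval_t_strict2 op h x y :
  (forall env a b, teval noorc env (op a b) = h (teval noorc env a) (teval noorc env b)) ->
  teval noorc [enc x; enc y] (t_strict2 op) = enc (obind2 x y h).
Proof. intros H. destruct x, y; cbn; auto. rewrite H. cbn. rewrite !Nat.sub_0_r. lia. Qed.

Definition t_optif : term :=
  TIf (TVar 0) (TIf (TSub (TVar 0) (TConst 1)) (TVar 1) (TVar 2)) (TConst 0).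
Definition t_guard : term := TIf (TVar 0) (TVar 1) (TConst 0).
Definition t_optorc : term :=
  TIf (TVar 0) (Call t_lookup [TSub (TVar 0) (TConst 1); TVar 1]) (TConst 0).

Definition code_oracle (c t : nat) : option nat :=
  match code_lookup c t with 0 => None | S v => Some v end.

Lemma teval_t_optorc t c :
  teval noorc [enc t; c] t_optorc = enc (match t with None => None | Some x => code_oracle c x end).
Proof.
  destruct t as [x|]; [|reflexivity]. unfold t_optorc. simpl_call. cbn [enc Nat.eqb].
  replace (S x - 1) with x by lia. rewrite ?teval_t_lookup. unfold code_oracle.
  now destruct (code_lookup c x).
Qed.

Definition rguarded_step (cs : recf) (k : nat) : recf :=
  RComp (compile 2 t_guard)
    [RProj 1; RComp cs (RProj 0 :: RComp rpred [RProj 1] :: map RProj (seq 2 k))].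

(* Partial values [o] are computed as [enc o]; the last environment entry is the
   code of the oracle prefix. *)
Fixpoint compile_partial (k : nat) (e : term) : recf :=
  match e with
  | TVar i => RComp RSucc [if i <? k then RProj i else RZero]
  | TConst c => rconst (S c)
  | TAdd a b => RComp (compile 2 (t_strict2 TAdd)) [compile_partial k a; compile_partial k b]
  | TSub a b => RComp (compile 2 (t_strict2 TSub)) [compile_partial k a; compile_partial k b]
  | TMul a b => RComp (compile 2 (t_strict2 TMul)) [compile_partial k a; compile_partial k b]
  | TIf c a b =>
      RComp (compile 3 t_optif) [compile_partial k c; compile_partial k a; compile_partial k b]
  | TLt a b => RComp (compile 2 (t_strict2 TLt)) [compile_partial k a; compile_partial k b]
  | TRec n z s =>
      RComp (compile 2 t_guard)
        [compile_partial k n;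
         RComp (RPrim (compile_partial k z) (rguarded_step (compile_partial (S (S k)) s) k))
               (RComp rpred [compile_partial k n] :: rprojs k)]
  | TLet a b =>
      RComp (compile 2 t_guard)
        [compile_partial k a;
         RComp (compile_partial (S k) b) (RComp rpred [compile_partial k a] :: rprojs k)]
  | TOrc t => RComp (compile 2 t_optorc) [compile_partial k t; RProj (k - 1)]
  end.

Lemma reval_compile2 e xs a b v g1 g2 :
  reval g1 xs a -> reval g2 xs b -> teval noorc [a; b] e = v ->
  reval (RComp (compile 2 e) [g1; g2]) xs v.
Proof. intros H1 H2 <-. eapply reval_comp2; eauto. apply (reval_compile e [a; b]). Qed.

Lemma reval_compile3 e xs a b c v g1 g2 g3 :
  reval g1 xs a -> reval g2 xs b -> reval g3 xs c -> teval noorc [a; b; c] e = v ->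
  reval (RComp (compile 3 e) [g1; g2; g3]) xs v.
Proof. intros H1 H2 H3 <-. eapply reval_comp3; eauto. apply (reval_compile e [a; b; c]). Qed.

Lemma reval_rguarded_loop cz cs (z : option nat) (st : nat -> nat -> option nat) env :
  reval cz env (enc z) -> (forall i a, reval cs (i :: a :: env) (enc (st i a))) ->
  forall M, reval (RPrim cz (rguarded_step cs (length env))) (M :: env) (enc (rec_opt z st M)).
Proof.
  intros Hz Hs M. induction M as [|M IH]; [now apply ev_prim0|].
  eapply ev_primS; [exact IH|]. cbn [rec_opt]. set (r := rec_opt z st M).
  eapply reval_compile2 with (b := enc (st M (pred (enc r))));
    [now apply ev_proj | | destruct r; reflexivity].
  eapply ev_comp; [|apply (Hs M (pred (enc r)))].
  constructor; [now apply ev_proj|].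
  constructor; [eapply reval_comp1; [now apply ev_proj | apply reval_rpred]|].
  apply (revals_projs_from env [M; enc r]).
Qed.

Lemma reval_compile_partial e env c k : k = length (env ++ [c]) ->
  reval (compile_partial k e) (env ++ [c]) (enc (tevalp (code_oracle c) (env ++ [c]) e)).
Proof.
  revert env k. induction e; intros env k Hk; cbn [compile_partial tevalp].
  - eapply reval_comp1; [|constructor].
    destruct (i <? k) eqn:E.
    + apply Nat.ltb_lt in E. constructor. apply nth_error_nth'. lia.
    + apply Nat.ltb_ge in E. rewrite nth_overflow by lia. constructor.
  - apply (reval_rconst (S c0)).
  - eapply reval_compile2; eauto. now apply teval_t_strict2.
  - eapply reval_compile2; eauto. now apply teval_t_strict2.
  - eapply reval_compile2; eauto. now apply teval_t_strict2.
  - eapply reval_compile3; eauto.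
    destruct (tevalp _ _ e1) as [[|x]|]; reflexivity.
  - eapply reval_compile2; eauto. now apply teval_t_strict2.
  - eapply reval_compile2 with
      (b := enc (rec_opt (tevalp (code_oracle c) (env ++ [c]) e2)
                   (fun i acc => tevalp (code_oracle c) (i :: acc :: env ++ [c]) e3)
                   (pred (enc (tevalp (code_oracle c) (env ++ [c]) e1)))));
      [now apply IHe1 | | destruct (tevalp _ _ e1); reflexivity].
    eapply ev_comp.
    + constructor; [eapply reval_comp1; [now apply IHe1 | apply reval_rpred] |].
      rewrite Hk. apply revals_rprojs.
    + rewrite Hk. apply (reval_rguarded_loop _ _ _ _ (env ++ [c])); [now apply IHe2|].
      intros i a. apply (IHe3 (i :: a :: env)). cbn. lia.
  - eapply reval_compile2 with
      (b := enc (tevalp (code_oracle c)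
                   (pred (enc (tevalp (code_oracle c) (env ++ [c]) e1)) :: env ++ [c]) e2));
      [now apply IHe1 | | destruct (tevalp _ _ e1); reflexivity].
    eapply ev_comp; [|apply (IHe2 (_ :: env)); cbn; lia].
    constructor; [eapply reval_comp1; [now apply IHe1 | apply reval_rpred] |].
    rewrite Hk. apply revals_rprojs.
  - eapply reval_compile2; [now apply IHe | | apply teval_t_optorc].
    constructor. rewrite Hk, length_app, Nat.add_1_r, Nat.sub_1_r. cbn [pred].
    rewrite nth_error_app2, Nat.sub_diag by lia. reflexivity.
Qed.

Definition agrees (g : nat -> option nat) (f : nat -> nat) : Prop :=
  forall t v, g t = Some v -> f t = v.
Definition oracle_le (g g' : nat -> option nat) : Prop :=
  forall t v, g t = Some v -> g' t = Some v.

Lemma obind2_Some x y h v :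
  obind2 x y h = Some v -> exists a b, x = Some a /\ y = Some b /\ v = h a b.
Proof. destruct x, y; cbn; intros H; try discriminate. inversion H; eauto. Qed.

Ltac obind2_Some_tac IH1 IH2 :=
  match goal with H : obind2 _ _ _ = Some _ |- _ =>
    apply obind2_Some in H as (? & ? & ?Ha & ?Hb & ->); erewrite IH1, IH2; eauto end.

Lemma tevalp_sound g f : agrees g f ->
  forall e env v, tevalp g env e = Some v -> teval f env e = v.
Proof.
  intros Hg. induction e; intros env v H; cbn in *;
    try obind2_Some_tac IHe1 IHe2; try congruence.
  - destruct (tevalp g env e1) as [n|] eqn:E1; try discriminate. rewrite (IHe1 _ _ E1).
    destruct (n =? 0); eauto.
  - destruct (tevalp g env e1) as [n|] eqn:E1; try discriminate. rewrite (IHe1 _ _ E1).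
    clear E1. revert v H. induction n as [|n IHn]; cbn; intros v H; eauto.
    destruct (rec_opt _ _ n) eqn:E; try discriminate. rewrite (IHn _ eq_refl). eauto.
  - destruct (tevalp g env e1) eqn:E1; try discriminate. rewrite (IHe1 _ _ E1). eauto.
  - destruct (tevalp g env e) eqn:E1; try discriminate. rewrite (IHe _ _ E1). auto.
Qed.

Lemma rec_opt_mono z z' st st' :
  (forall v, z = Some v -> z' = Some v) -> (forall i a v, st i a = Some v -> st' i a = Some v) ->
  forall N v, rec_opt z st N = Some v -> rec_opt z' st' N = Some v.
Proof.
  intros Hz Hs N. induction N as [|N IH]; cbn; intros v H; auto.
  destruct (rec_opt z st N) eqn:E; try discriminate. rewrite (IH _ eq_refl). auto.
Qed.

Lemma tevalp_mono g g' : oracle_le g g' ->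
  forall e env v, tevalp g env e = Some v -> tevalp g' env e = Some v.
Proof.
  intros Hle. induction e; intros env v H; cbn in *; auto;
    try (obind2_Some_tac IHe1 IHe2; reflexivity).
  - destruct (tevalp g env e1) as [n|] eqn:E1; try discriminate. rewrite (IHe1 _ _ E1).
    destruct (n =? 0); eauto.
  - destruct (tevalp g env e1) as [n|] eqn:E1; try discriminate. rewrite (IHe1 _ _ E1).
    revert H. apply rec_opt_mono; eauto.
  - destruct (tevalp g env e1) eqn:E1; try discriminate. rewrite (IHe1 _ _ E1). eauto.
  - destruct (tevalp g env e) eqn:E1; try discriminate. rewrite (IHe _ _ E1). auto.
Qed.

Definition prefix_oracle (p : Baire) (k t : nat) : option nat :=
  if t <? k then Some (p t) else None.

Lemma tevalp_prefix_mono p k k' e env v : k <= k' ->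
  tevalp (prefix_oracle p k) env e = Some v -> tevalp (prefix_oracle p k') env e = Some v.
Proof.
  intros Hk. apply tevalp_mono. intros t w. unfold prefix_oracle.
  destruct (Nat.ltb_spec t k), (Nat.ltb_spec t k'); congruence || lia.
Qed.

Lemma rec_opt_eventually (z : nat -> option nat) (st : nat -> nat -> nat -> option nat)
    (z0 : nat) (st0 : nat -> nat -> nat) :
  (forall k k' v, k <= k' -> z k = Some v -> z k' = Some v) ->
  (forall k k' i a v, k <= k' -> st k i a = Some v -> st k' i a = Some v) ->
  (exists k, z k = Some z0) -> (forall i a, exists k, st k i a = Some (st0 i a)) ->
  forall N, exists k, rec_opt (z k) (st k) N = Some (rec_iter z0 st0 N).
Proof.
  intros Hz Hst [kz Ez] Hs N. induction N as [|N [k Hk]]; [now exists kz|].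
  destruct (Hs N (rec_iter z0 st0 N)) as [k' Hk']. exists (k + k'). cbn.
  rewrite (rec_opt_mono _ (z (k + k')) _ (st (k + k')) (fun v => Hz k (k + k') v ltac:(lia))
             (fun i a v => Hst k (k + k') i a v ltac:(lia)) N _ Hk).
  apply (Hst k'); [lia | exact Hk'].
Qed.

Lemma tevalp_prefix_complete p e env :
  exists k, tevalp (prefix_oracle p k) env e = Some (teval p env e).
Proof.
  revert env. induction e; intros env; cbn [tevalp teval];
    try (destruct (IHe1 env) as [k1 H1], (IHe2 env) as [k2 H2]; exists (k1 + k2);
         rewrite (tevalp_prefix_mono p k1 (k1 + k2) _ _ _ ltac:(lia) H1),
                 (tevalp_prefix_mono p k2 (k1 + k2) _ _ _ ltac:(lia) H2); reflexivity);
    try (exists 0; reflexivity).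
  - destruct (IHe1 env) as [k1 H1], (IHe2 env) as [k2 H2], (IHe3 env) as [k3 H3].
    exists (k1 + k2 + k3). rewrite (tevalp_prefix_mono p k1 (k1 + k2 + k3) _ _ _ ltac:(lia) H1).
    destruct (teval p env e1 =? 0);
      [apply (tevalp_prefix_mono p k3) | apply (tevalp_prefix_mono p k2)]; auto; lia.
  - destruct (IHe1 env) as [k1 H1].
    destruct (rec_opt_eventually (fun k => tevalp (prefix_oracle p k) env e2)
                (fun k i acc => tevalp (prefix_oracle p k) (i :: acc :: env) e3)
                (teval p env e2) (fun i acc => teval p (i :: acc :: env) e3))
      with (N := teval p env e1) as [k3 H3].
    { intros k k' v Hk. now apply tevalp_prefix_mono. }
    { intros k k' i a v Hk. now apply tevalp_prefix_mono. }
    { apply IHe2. }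
    { intros i a. apply IHe3. }
    exists (k1 + k3). rewrite (tevalp_prefix_mono p k1 (k1 + k3) _ _ _ ltac:(lia) H1).
    revert H3. apply rec_opt_mono; intros; apply (tevalp_prefix_mono p k3); auto; lia.
  - destruct (IHe1 env) as [k1 H1], (IHe2 (teval p env e1 :: env)) as [k2 H2].
    exists (k1 + k2). rewrite (tevalp_prefix_mono p k1 (k1 + k2) _ _ _ ltac:(lia) H1).
    apply (tevalp_prefix_mono p k2); [lia | exact H2].
  - destruct (IHe env) as [k1 H1]. exists (S (teval p env e) + k1).
    rewrite (tevalp_prefix_mono p k1 (S (teval p env e) + k1) _ _ _ ltac:(lia) H1).
    unfold prefix_oracle.
    destruct (Nat.ltb_spec (teval p env e) (S (teval p env e) + k1)); [reflexivity | lia].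
Qed.

Lemma rec_opt_ext z st st' :
  (forall i a, st i a = st' i a) -> forall N, rec_opt z st N = rec_opt z st' N.
Proof. intros H N. induction N as [|N IH]; cbn; auto. rewrite IH. now destruct (rec_opt z st' N). Qed.

Lemma tevalp_scoped g : forall e env1 env2, scoped (length env1) e = true ->
  tevalp g (env1 ++ env2) e = tevalp g env1 e.
Proof.
  induction e; intros env1 env2 H; cbn in *; split_scoped;
    try (rewrite ?IHe, ?IHe1, ?IHe2, ?IHe3 by auto; reflexivity).
  - apply Nat.ltb_lt in H. now rewrite app_nth1.
  - rewrite IHe1 by auto. destruct (tevalp g env1 e1); auto. rewrite IHe2 by auto.
    apply rec_opt_ext. intros i a. apply (IHe3 (i :: a :: env1)). auto.
  - rewrite IHe1 by auto. destruct (tevalp g env1 e1); auto. apply (IHe2 (_ :: env1)). auto.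
Qed.

Lemma ex_least (P : nat -> Prop) : (forall k, P k \/ ~ P k) -> (exists k, P k) ->
  exists k, P k /\ forall j, j < k -> ~ P j.
Proof.
  intros Hd Hex. destruct (Wf_nat.dec_inh_nat_subset_has_unique_least_element P Hd Hex)
    as [k [[Hk Hmin] _]].
  exists k. split; auto. intros j Hj Pj. specialize (Hmin j Pj). lia.
Qed.

Definition term_assoc (e : term) (w : nat) : nat :=
  enc (tevalp (code_oracle (snd (nunpair w))) [fst (nunpair w); snd (nunpair w)] e).

Lemma computable_term_assoc e : computable_nat (term_assoc e).
Proof.
  exists (RComp (compile_partial 2 e) [compile 1 t_fst; compile 1 t_snd]). intros w.
  eapply reval_comp2.
  - pose proof (reval_compile t_fst [w]) as H. rewrite teval_t_fst in H. exact H.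
  - pose proof (reval_compile t_snd [w]) as H. rewrite teval_t_snd in H. exact H.
  - exact (reval_compile_partial e [fst (nunpair w)] (snd (nunpair w)) 2 eq_refl).
Qed.

Lemma code_oracle_prefix (p : Baire) k : code_oracle (code_list (prefix p k)) = prefix_oracle p k.
Proof.
  apply functional_extensionality. intros t. unfold code_oracle, prefix_oracle.
  rewrite code_lookup_prefix. now destruct (t <? k).
Qed.

Lemma assoc_eval_term_assoc e : scoped 1 e = true ->
  forall p : Baire, assoc_eval (term_assoc e) p (fun n => teval p [n] e).
Proof.
  intros He p n.
  assert (Ha : forall k, term_assoc e (npair n (code_list (prefix p k))) =
                         enc (tevalp (prefix_oracle p k) [n] e)).
  { intros k. unfold term_assoc. rewrite nunpair_npair. cbn [fst snd].
    rewrite code_oracle_prefix. exact (f_equal enc (tevalp_scoped _ e [n] [_] He)). }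
  destruct (ex_least (fun k => tevalp (prefix_oracle p k) [n] e <> None)) as [k [Hk Hmin]].
  { intros k. destruct (tevalp (prefix_oracle p k) [n] e); [left | right]; congruence. }
  { destruct (tevalp_prefix_complete p e [n]) as [k Hk]. exists k. congruence. }
  exists k. split.
  - rewrite Ha. destruct (tevalp (prefix_oracle p k) [n] e) eqn:E; [|congruence].
    apply tevalp_sound with (f := p) in E; [now rewrite E|].
    intros t v. unfold prefix_oracle. destruct (t <? k); congruence.
  - intros j Hj. rewrite Ha. specialize (Hmin j Hj).
    destruct (tevalp (prefix_oracle p j) [n] e); [|reflexivity]. exfalso; apply Hmin; congruence.
Qed.

Theorem term_associate (e : term) : scoped 1 e = true ->
  exists alpha, computable_nat alpha /\
    forall p : Baire, assoc_eval alpha p (fun n => teval p [n] e).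
Proof.
  intros H. exists (term_assoc e). split; [apply computable_term_assoc | now apply assoc_eval_term_assoc].
Qed.

(** * Rational codes *)

Definition zpos (a : nat) : nat := if Nat.even a then Nat.div2 a else 0.
Definition zneg (a : nat) : nat := if Nat.even a then 0 else S (Nat.div2 a).
Definition qpos (c : nat) : nat := zpos (fst (nunpair c)).
Definition qneg (c : nat) : nat := zneg (fst (nunpair c)).
Definition qden (c : nat) : nat := S (snd (nunpair c)).

(* Inverse to [nat_to_Q] on [(P - M) / D], for [D >= 1]. *)
Definition qcode (P M D : nat) : nat :=
  npair (if M <=? P then 2 * (P - M) else 2 * (M - P) - 1) (D - 1).

Definition t_zpos : term := TIf (Call t_even [TVar 0]) (Call t_div2 [TVar 0]) (TConst 0).
Definition t_zneg : term :=
  TIf (Call t_even [TVar 0]) (TConst 0) (TAdd (Call t_div2 [TVar 0]) (TConst 1)).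
Definition t_qpos : term := Call t_zpos [Call t_fst [TVar 0]].
Definition t_qneg : term := Call t_zneg [Call t_fst [TVar 0]].
Definition t_qden : term := TAdd (Call t_snd [TVar 0]) (TConst 1).
Definition t_qcode : term :=
  Call t_pair [TIf (TLt (TVar 0) (TVar 1))
                 (TSub (TMul (TConst 2) (TSub (TVar 1) (TVar 0))) (TConst 1))
                 (TMul (TConst 2) (TSub (TVar 0) (TVar 1)));
               TSub (TVar 2) (TConst 1)].

Lemma teval_t_qpos f c : teval f [c] t_qpos = qpos c.
Proof.
  unfold t_qpos, t_zpos. simpl_call. rewrite teval_t_fst, teval_t_even, teval_t_div2.
  unfold qpos, zpos. now destruct (Nat.even _).
Qed.

Lemma teval_t_qneg f c : teval f [c] t_qneg = qneg c.
Proof.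
  unfold t_qneg, t_zneg. simpl_call. rewrite teval_t_fst, teval_t_even, teval_t_div2.
  unfold qneg, zneg. destruct (Nat.even _); cbn; lia.
Qed.

Lemma teval_t_qden f c : teval f [c] t_qden = qden c.
Proof. unfold t_qden. simpl_call. rewrite teval_t_snd. unfold qden. lia. Qed.

Lemma teval_t_qcode f P M D : teval f [P; M; D] t_qcode = qcode P M D.
Proof.
  unfold t_qcode, qcode. simpl_call. rewrite teval_t_pair. f_equal.
  destruct (Nat.ltb_spec P M), (Nat.leb_spec M P); cbn; lia.
Qed.

Local Open Scope R_scope.

Definition qval (c : nat) : R := Q2R (nat_to_Q c).
Definition ratv (P M D : nat) : R := (INR P - INR M) / INR D.

Lemma qden_pos c : (1 <= qden c)%nat.
Proof. unfold qden. lia. Qed.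

Lemma qval_ratv c : qval c = ratv (qpos c) (qneg c) (qden c).
Proof.
  unfold qval, nat_to_Q, ratv, qpos, qneg, qden. destruct (nunpair c) as [a b]. cbn [fst snd].
  unfold Q2R, Qnum, Qden.
  replace (nat_to_Z a) with (Z.of_nat (zpos a) - Z.of_nat (zneg a))%Z
    by (unfold nat_to_Z, zpos, zneg; destruct (Nat.even a); lia).
  rewrite minus_IZR, <- !INR_IZR_INZ. unfold Rdiv. do 2 f_equal.
  now rewrite INR_IZR_INZ, Zpos_P_of_succ_nat, Nat2Z.inj_succ.
Qed.

Lemma qval_qcode P M D : (1 <= D)%nat -> qval (qcode P M D) = ratv P M D.
Proof.
  intros HD. rewrite qval_ratv. unfold qcode, qpos, qneg, qden. rewrite nunpair_npair.
  cbn [fst snd]. replace (S (D - 1)) with D by lia. unfold ratv. f_equal.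
  unfold zpos, zneg. destruct (Nat.leb_spec M P).
  - rewrite Nat.even_mul, Nat.div2_double. cbn [Nat.even orb].
    rewrite minus_INR by lia. cbn [INR]. lra.
  - replace (2 * (M - P) - 1)%nat with (S (2 * (M - P - 1))) by lia.
    rewrite Nat.even_succ, Nat.odd_mul, Nat.div2_succ_double. cbn [Nat.odd Nat.even andb negb].
    replace (S (M - P - 1)) with (M - P)%nat by lia. rewrite minus_INR by lia. cbn [INR]. lra.
Qed.

Lemma ratv_lt_iff P1 M1 D1 P2 M2 D2 : (1 <= D1)%nat -> (1 <= D2)%nat ->
  ((P1 * D2 + M2 * D1 < P2 * D1 + M1 * D2)%nat <-> ratv P1 M1 D1 < ratv P2 M2 D2).
Proof.
  intros H1 H2. unfold ratv.
  assert (d1 : 0 < INR D1) by (apply lt_0_INR; lia).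
  assert (d2 : 0 < INR D2) by (apply lt_0_INR; lia).
  assert (E : forall u v, u / INR D1 < v / INR D2 <-> u * INR D2 < v * INR D1).
  { assert (Hi : 0 < / (INR D1 * INR D2)) by (apply Rinv_0_lt_compat; nra).
    intros u v. split; intros H.
    - apply Rmult_lt_reg_r with (/ (INR D1 * INR D2)); [exact Hi|].
      replace (u * INR D2 * / (INR D1 * INR D2)) with (u / INR D1) by (field; lra).
      replace (v * INR D1 * / (INR D1 * INR D2)) with (v / INR D2) by (field; lra). exact H.
    - replace (u / INR D1) with (u * INR D2 * / (INR D1 * INR D2)) by (field; lra).
      replace (v / INR D2) with (v * INR D1 * / (INR D1 * INR D2)) by (field; lra).
      now apply Rmult_lt_compat_r. }
  rewrite E. split; intros H.
  - apply lt_INR in H. rewrite !plus_INR, !mult_INR in H. lra.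
  - apply INR_lt. rewrite !plus_INR, !mult_INR. lra.
Qed.

Lemma ratv_shift P M D K a b : (1 <= D)%nat -> (1 <= K)%nat ->
  ratv (P * K + a * D) (M * K + b * D) (D * K) = ratv P M D + (INR a - INR b) / INR K.
Proof.
  intros HD HK. unfold ratv. rewrite !plus_INR, !mult_INR.
  assert (0 < INR D) by (apply lt_0_INR; lia). assert (0 < INR K) by (apply lt_0_INR; lia).
  field. lra.
Qed.

Local Open Scope nat_scope.

Definition t_qlt (P1 M1 D1 P2 M2 D2 : term) : term :=
  TLt (TAdd (TMul P1 D2) (TMul M2 D1)) (TAdd (TMul P2 D1) (TMul M1 D2)).

Lemma teval_t_qlt f env P1 M1 D1 P2 M2 D2 :
  1 <= teval f env D1 -> 1 <= teval f env D2 ->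
  (teval f env (t_qlt P1 M1 D1 P2 M2 D2) <> 0 <->
   (ratv (teval f env P1) (teval f env M1) (teval f env D1) <
    ratv (teval f env P2) (teval f env M2) (teval f env D2))%R).
Proof.
  intros H1 H2. rewrite <- ratv_lt_iff by assumption. cbn [t_qlt teval].
  destruct (Nat.ltb_spec (teval f env P1 * teval f env D2 + teval f env M2 * teval f env D1)
                         (teval f env P2 * teval f env D1 + teval f env M1 * teval f env D2));
    split; intros; lia.
Qed.

(** * The stages of the limit computation *)

Definition tq_pos (c : term) : term := Call t_qpos [c].
Definition tq_neg (c : term) : term := Call t_qneg [c].
Definition tq_den (c : term) : term := Call t_qden [c].

Lemma teval_tq_pos f env c : teval f env (tq_pos c) = qpos (teval f env c).
Proof. unfold tq_pos. simpl_call. apply teval_t_qpos. Qed.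
Lemma teval_tq_neg f env c : teval f env (tq_neg c) = qneg (teval f env c).
Proof. unfold tq_neg. simpl_call. apply teval_t_qneg. Qed.
Lemma teval_tq_den f env c : teval f env (tq_den c) = qden (teval f env c).
Proof. unfold tq_den. simpl_call. apply teval_t_qden. Qed.

Lemma teval_Call_t_pow2 f env a : teval f env (Call t_pow2 [a]) = 2 ^ teval f env a.
Proof. simpl_call. apply teval_t_pow2. Qed.

Ltac simpl_teval :=
  repeat (first [ rewrite teval_tq_pos | rewrite teval_tq_neg | rewrite teval_tq_den
                | rewrite teval_Call_t_pow2 | progress cbn [teval nth] ]).

Lemma pow2_pos_nat k : 1 <= 2 ^ k.
Proof. pose proof (Nat.pow_nonzero 2 k). lia. Qed.

Local Open Scope R_scope.

(* A name [p] of [(x, A)] carries the Cauchy name of [x] at even and the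
   enumeration of the complement of [A] at odd positions. *)
Definition approx (p : Baire) (N : nat) : R := qval (p (2 * N)%nat).
Definition lo_end (c : nat) : R := qval (fst (nunpair c)).
Definition hi_end (c : nat) : R := qval (snd (nunpair c)).

Definition interval_contains (p : Baire) (l : nat) (a b : R) : Prop :=
  exists c, p (2 * l + 1)%nat = S c /\ lo_end c < a /\ b < hi_end c.

Lemma pow2_pos k : 0 < 2 ^ k.
Proof. apply pow_lt. lra. Qed.

Lemma INR_pow2 k : INR (2 ^ k) = 2 ^ k.
Proof. rewrite pow_INR. reflexivity. Qed.

Local Open Scope nat_scope.

Definition t_in_interval (L P1 M1 P2 M2 D : term) : term :=
  let idx := TOrc (TAdd (TMul (TConst 2) L) (TConst 1)) in
  let lo := Call t_fst [TSub idx (TConst 1)] in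
  let hi := Call t_snd [TSub idx (TConst 1)] in
  tand idx (tand (t_qlt (tq_pos lo) (tq_neg lo) (tq_den lo) P1 M1 D)
                 (t_qlt P2 M2 D (tq_pos hi) (tq_neg hi) (tq_den hi))).

Lemma teval_t_in_interval f env L P1 M1 P2 M2 D : 1 <= teval f env D ->
  teval f env (t_in_interval L P1 M1 P2 M2 D) <> 0 <->
  interval_contains f (teval f env L)
    (ratv (teval f env P1) (teval f env M1) (teval f env D))
    (ratv (teval f env P2) (teval f env M2) (teval f env D)).
Proof.
  intros HD. unfold t_in_interval. rewrite !teval_tand, !teval_t_qlt by (simpl_teval; auto using qden_pos).
  simpl_teval. simpl_call. rewrite teval_t_fst, teval_t_snd.
  unfold interval_contains, lo_end, hi_end.
  set (v := f (2 * teval f env L + 1)). split.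
  - intros (Hv & H1 & H2). exists (v - 1). rewrite !qval_ratv. split; [lia | auto].
  - intros (c & Hc & H1 & H2). rewrite !qval_ratv in H1, H2. rewrite Hc.
    replace (S c - 1) with c by lia. split; [lia | auto].
Qed.

Local Open Scope R_scope.

Definition grid_point (p : Baire) (k N j g : nat) : R :=
  approx p N - INR j / 2 ^ N + INR g / 2 ^ k.

Definition ball_certified (p : Baire) (k N j : nat) : Prop :=
  (N <= k)%nat /\ forall g, (g < 2 * j * 2 ^ (k - N) + 1)%nat ->
    exists l, (l < k)%nat /\
      interval_contains p l (grid_point p k N j g - / 2 ^ k) (grid_point p k N j g + / 2 ^ k).

Lemma ratv_grid P M D K a b : (1 <= D)%nat ->
  ratv (P * 2 ^ K + a * D) (M * 2 ^ K + b * D) (D * 2 ^ K) = ratv P M D + (INR a - INR b) / 2 ^ K.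
Proof. intros HD. rewrite ratv_shift, INR_pow2 by auto using pow2_pos_nat. reflexivity. Qed.

Lemma pow2_sub k N : (N <= k)%nat -> 2 ^ k = 2 ^ (k - N) * 2 ^ N.
Proof. intros H. rewrite <- pow_add. f_equal. lia. Qed.

Local Open Scope nat_scope.

Lemma qden_pow2_pos c k : 1 <= qden c * 2 ^ k.
Proof. pose proof (qden_pos c). pose proof (pow2_pos_nat k). nia. Qed.

Definition t_cell : term :=
  let xc := TOrc (TMul (TConst 2) (TVar 3)) in
  let PK := Call t_pow2 [TVar 2] in
  let shifted_j := TMul (TVar 4) (Call t_pow2 [TSub (TVar 2) (TVar 3)]) in
  let XP := tq_pos xc in let XM := tq_neg xc in let XD := tq_den xc in
  t_in_interval (TVar 0)
    (TAdd (TMul XP PK) (TMul (TVar 1) XD)) (TAdd (TMul XM PK) (TMul (TAdd shifted_j (TConst 1)) XD))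
    (TAdd (TMul XP PK) (TMul (TAdd (TVar 1) (TConst 1)) XD)) (TAdd (TMul XM PK) (TMul shifted_j XD))
    (TMul XD PK).

Lemma teval_t_cell p l g k N j : N <= k ->
  teval p [l; g; k; N; j] t_cell <> 0 <->
  interval_contains p l (grid_point p k N j g - / 2 ^ k)%R (grid_point p k N j g + / 2 ^ k)%R.
Proof.
  intros HNk. unfold t_cell. rewrite teval_t_in_interval by (simpl_teval; apply qden_pow2_pos).
  simpl_teval. rewrite !ratv_grid by apply qden_pos.
  assert (Hs : (INR (j * 2 ^ (k - N)) / 2 ^ k = INR j / 2 ^ N)%R).
  { rewrite mult_INR, INR_pow2, (pow2_sub k N HNk).
    pose proof (pow2_pos N). pose proof (pow2_pos (k - N)). field. lra. }
  unfold grid_point, approx. rewrite qval_ratv. set (X := ratv _ _ _).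
  assert (Hk : (2 ^ k <> 0)%R) by (apply pow_nonzero; lra).
  replace (X + (INR g - INR (j * 2 ^ (k - N) + 1)) / 2 ^ k)%R
    with (X - INR j / 2 ^ N + INR g / 2 ^ k - / 2 ^ k)%R
    by (rewrite <- Hs, plus_INR; cbn [INR]; field; exact Hk).
  replace (X + (INR (g + 1) - INR (j * 2 ^ (k - N))) / 2 ^ k)%R
    with (X - INR j / 2 ^ N + INR g / 2 ^ k + / 2 ^ k)%R
    by (rewrite <- Hs, plus_INR; cbn [INR]; field; exact Hk).
  reflexivity.
Qed.

Definition t_certified : term :=
  TIf (TLt (TVar 0) (TVar 1)) (TConst 0)
    (tforall_lt (TAdd (TMul (TMul (TConst 2) (TVar 2)) (Call t_pow2 [TSub (TVar 0) (TVar 1)])) (TConst 1))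
       (texists_lt (TVar 1) t_cell)).

Lemma teval_t_certified p k N j : teval p [k; N; j] t_certified <> 0 <-> ball_certified p k N j.
Proof.
  unfold t_certified, ball_certified. cbn [teval nth].
  destruct (Nat.ltb_spec k N) as [HkN|HNk]; cbn [Nat.eqb]; [split; intros; lia|].
  rewrite teval_tforall_lt. simpl_teval. split.
  - intros H. split; [exact HNk|]. intros g Hg.
    specialize (H g Hg). apply teval_texists_lt in H as (l & Hl & Hc).
    exists l. split; [exact Hl|]. now apply teval_t_cell.
  - intros [_ H] g Hg. apply teval_texists_lt. destruct (H g Hg) as (l & Hl & Hc).
    exists l. split; [exact Hl|]. now apply teval_t_cell.
Qed.

Definition t_uncertified : term :=
  tforall_lt (TAdd (TVar 0) (TConst 1)) (tnot (Call t_certified [TVar 0; TVar 2; TVar 3])).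

Lemma teval_t_uncertified p k N j :
  teval p [k; N; j] t_uncertified <> 0 <-> forall k', k' <= k -> ~ ball_certified p k' N j.
Proof.
  unfold t_uncertified. rewrite teval_tforall_lt. cbn [teval nth].
  setoid_rewrite teval_tnot. split.
  - intros H k' Hk' Hc. apply teval_t_certified in Hc.
    specialize (H k' ltac:(lia)). revert H. simpl_call. exact Hc.
  - intros H k' Hk'. simpl_call. destruct (teval p [k'; N; j] t_certified) eqn:E; [reflexivity|].
    exfalso. apply (H k'); [lia|]. apply teval_t_certified. congruence.
Qed.

Definition t_radius : term :=
  tleast (TAdd (TVar 0) (TConst 1)) (Call t_uncertified [TVar 1; TVar 2; TVar 0]).

(* The stage-[k] guess at [2^N d(x, A)]: the least [j] whose ball is not yet certified. *)
Definition radius_guess (p : Baire) (k N : nat) : nat := teval p [k; N] t_radius.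

Lemma radius_guess_eq p k N J : J <= k ->
  (forall k', k' <= k -> ~ ball_certified p k' N J) ->
  (forall j, j < J -> exists k', k' <= k /\ ball_certified p k' N j) ->
  radius_guess p k N = J.
Proof.
  intros HJk HJ Hlt. unfold radius_guess, t_radius. rewrite teval_tleast. cbn [teval nth].
  apply least_below_eq; [lia | |].
  - simpl_call. destruct (teval p [k; N; J] t_uncertified) eqn:E; [|reflexivity].
    exfalso. exact (proj2 (teval_t_uncertified p k N J) HJ E).
  - intros j Hj. simpl_call. destruct (teval p [k; N; j] t_uncertified) eqn:E; [reflexivity|].
    destruct (Hlt j Hj) as (k' & Hk' & Hc). exfalso.
    refine (proj1 (teval_t_uncertified p k N j) _ k' Hk' Hc). congruence.
Qed.

Definition cand_pos (p : Baire) (J : nat -> nat) (s m : nat) : nat :=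
  let c := p (2 * (m + 2)) in
  if s =? 0 then qpos c * 2 ^ (m + 2) else qpos c * 2 ^ (m + 2) + J (m + 2) * qden c.
Definition cand_neg (p : Baire) (J : nat -> nat) (s m : nat) : nat :=
  let c := p (2 * (m + 2)) in
  if s =? 0 then qneg c * 2 ^ (m + 2) + J (m + 2) * qden c else qneg c * 2 ^ (m + 2).
Definition cand_den (p : Baire) (m : nat) : nat := qden (p (2 * (m + 2))) * 2 ^ (m + 2).

Definition candidate (p : Baire) (J : nat -> nat) (s m : nat) : R :=
  ratv (cand_pos p J s m) (cand_neg p J s m) (cand_den p m).

Lemma candidate_eq p J s m : let N := m + 2 in candidate p J s m =
  (if s =? 0 then approx p N - INR (J N) / 2 ^ N else approx p N + INR (J N) / 2 ^ N)%R.
Proof.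
  intros N. unfold candidate, cand_pos, cand_neg, cand_den, approx. fold N.
  rewrite qval_ratv. set (c := p (2 * N)).
  destruct (s =? 0).
  - replace (qpos c * 2 ^ N) with (qpos c * 2 ^ N + 0 * qden c) by lia.
    rewrite ratv_grid by apply qden_pos. cbn [INR]. unfold Rdiv. ring.
  - replace (qneg c * 2 ^ N) with (qneg c * 2 ^ N + 0 * qden c) by lia.
    rewrite ratv_grid by apply qden_pos. cbn [INR]. unfold Rdiv. ring.
Qed.

Definition t_cand_part (pick : term -> term) : term := pick (TOrc (TMul (TConst 2) (TAdd (TVar 0) (TConst 2)))).
Definition t_pow_m2 : term := Call t_pow2 [TAdd (TVar 0) (TConst 2)].
Definition t_guess_m2 : term := Call t_radius [TVar 1; TAdd (TVar 0) (TConst 2)].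

Definition t_cand_pos : term :=
  TIf (TVar 2) (TAdd (TMul (t_cand_part tq_pos) t_pow_m2) (TMul t_guess_m2 (t_cand_part tq_den)))
    (TMul (t_cand_part tq_pos) t_pow_m2).
Definition t_cand_neg : term :=
  TIf (TVar 2) (TMul (t_cand_part tq_neg) t_pow_m2)
    (TAdd (TMul (t_cand_part tq_neg) t_pow_m2) (TMul t_guess_m2 (t_cand_part tq_den))).
Definition t_cand_den : term := TMul (t_cand_part tq_den) t_pow_m2.

Lemma teval_t_cand p m k s :
  teval p [m; k; s] t_cand_pos = cand_pos p (radius_guess p k) s m /\
  teval p [m; k; s] t_cand_neg = cand_neg p (radius_guess p k) s m /\
  teval p [m; k; s] t_cand_den = cand_den p m.
Proof.
  unfold t_cand_pos, t_cand_neg, t_cand_den, t_cand_part, t_pow_m2, t_guess_m2.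
  simpl_teval. simpl_call. fold (radius_guess p k (m + 2)).
  unfold cand_pos, cand_neg, cand_den. now destruct (s =? 0).
Qed.

Definition excluded (p : Baire) (J : nat -> nat) (s m : nat) : Prop :=
  exists l, l < m + 1 /\
    interval_contains p l (candidate p J s m - / 2 ^ m)%R (candidate p J s m + / 2 ^ m)%R.

Definition t_excluded : term :=
  let CP := Call t_cand_pos [TVar 1; TVar 2; TVar 3] in
  let CM := Call t_cand_neg [TVar 1; TVar 2; TVar 3] in
  let CD := Call t_cand_den [TVar 1; TVar 2; TVar 3] in
  let PM := Call t_pow2 [TVar 1] in
  texists_lt (TAdd (TVar 0) (TConst 1))
    (t_in_interval (TVar 0) (TMul CP PM) (TAdd (TMul CM PM) CD)
                   (TAdd (TMul CP PM) CD) (TMul CM PM) (TMul CD PM)).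

Lemma cand_den_pos p m : 1 <= cand_den p m.
Proof. apply qden_pow2_pos. Qed.

Lemma ratv_minus_pow2 P M D m : 1 <= D ->
  ratv (P * 2 ^ m) (M * 2 ^ m + D) (D * 2 ^ m) = (ratv P M D - / 2 ^ m)%R.
Proof.
  intros HD. replace (P * 2 ^ m) with (P * 2 ^ m + 0 * D) by lia.
  replace (M * 2 ^ m + D) with (M * 2 ^ m + 1 * D) by lia.
  rewrite ratv_grid by exact HD. cbn [INR]. unfold Rdiv. ring.
Qed.

Lemma ratv_plus_pow2 P M D m : 1 <= D ->
  ratv (P * 2 ^ m + D) (M * 2 ^ m) (D * 2 ^ m) = (ratv P M D + / 2 ^ m)%R.
Proof.
  intros HD. replace (P * 2 ^ m + D) with (P * 2 ^ m + 1 * D) by lia.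
  replace (M * 2 ^ m) with (M * 2 ^ m + 0 * D) by lia.
  rewrite ratv_grid by exact HD. cbn [INR]. unfold Rdiv. ring.
Qed.

Lemma teval_t_excluded p m k s :
  teval p [m; k; s] t_excluded <> 0 <-> excluded p (radius_guess p k) s m.
Proof.
  unfold t_excluded, excluded. rewrite teval_texists_lt. cbn [teval nth].
  destruct (teval_t_cand p m k s) as (E1 & E2 & E3).
  assert (HD := cand_den_pos p m). assert (Hm := pow2_pos_nat m).
  split; intros (l & Hl & H); exists l; split; auto; revert H;
    (rewrite teval_t_in_interval; simpl_call; rewrite ?E1, ?E2, ?E3, ?teval_t_pow2; [|nia]);
    rewrite ratv_minus_pow2, ratv_plus_pow2 by exact HD; auto.
Qed.

Definition first_excluded (p : Baire) (J : nat -> nat) (s m : nat) : Prop :=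
  excluded p J s m /\ forall m', m' < m -> ~ excluded p J s m'.

Definition fire_bit (p : Baire) (J : nat -> nat) (s m : nat) : nat :=
  if excluded_middle_informative (first_excluded p J s m) then 1 else 0.

Definition t_fire : term :=
  tand t_excluded (tforall_lt (TVar 0) (tnot (Call t_excluded [TVar 0; TVar 2; TVar 3]))).

Lemma teval_t_fire p m k s : teval p [m; k; s] t_fire = fire_bit p (radius_guess p k) s m.
Proof.
  assert (Hiff : teval p [m; k; s] t_fire <> 0 <-> first_excluded p (radius_guess p k) s m).
  { unfold t_fire, first_excluded. rewrite teval_tand, teval_tforall_lt, teval_t_excluded.
    cbn [teval nth]. apply and_iff_compat_l. split.
    - intros H m' Hm' Hx. specialize (H m' Hm'). revert H. rewrite teval_tnot. simpl_call.
      now apply teval_t_excluded.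
    - intros H m' Hm'. rewrite teval_tnot. simpl_call.
      destruct (teval p [m'; k; s] t_excluded) eqn:E; [reflexivity|].
      exfalso. apply (H m' Hm'), teval_t_excluded. congruence. }
  unfold fire_bit. destruct (excluded_middle_informative _) as [H|H];
    destruct (teval_tand_01 p [m; k; s] t_excluded
                (tforall_lt (TVar 0) (tnot (Call t_excluded [TVar 0; TVar 2; TVar 3])))) as [E|E];
    fold t_fire in E; rewrite E in *; tauto || lia.
Qed.

Definition cand_code (p : Baire) (J : nat -> nat) (s m : nat) : nat :=
  qcode (cand_pos p J s m) (cand_neg p J s m) (cand_den p m).

Definition t_cand_code : term := Call t_qcode [t_cand_pos; t_cand_neg; t_cand_den].

Lemma teval_t_cand_code p m k s : teval p [m; k; s] t_cand_code = cand_code p (radius_guess p k) s m.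
Proof.
  destruct (teval_t_cand p m k s) as (E1 & E2 & E3). unfold t_cand_code. simpl_call.
  now rewrite E1, E2, E3, teval_t_qcode.
Qed.

(* The name from which [LLPO] reads its two instances (positions [4n], [4n+2])
   and the Cauchy names of the two candidates (positions [4n+1], [4n+3]). *)
Definition name_of (p : Baire) (J : nat -> nat) : Baire :=
  bpair (bpair (fire_bit p J 0) (fire_bit p J 1)) (bpair (cand_code p J 0) (cand_code p J 1)).

Definition t_bpair (A B : term) : term :=
  TIf (Call t_even [TVar 0]) (Call A [Call t_div2 [TVar 0]; TVar 1])
      (Call B [Call t_div2 [TVar 0]; TVar 1]).

Lemma teval_t_bpair f A B i k : scoped 2 A = true -> scoped 2 B = true ->
  teval f [i; k] (t_bpair A B) = bpair (fun n => teval f [n; k] A) (fun n => teval f [n; k] B) i.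
Proof.
  intros HA HB. unfold t_bpair, bpair. cbn [teval].
  rewrite (teval_Call f A), (teval_Call f B) by assumption. simpl_call.
  rewrite teval_t_even, teval_t_div2.
  now destruct (Nat.even i).
Qed.

Definition t_side (T : term) (s : nat) : term := Call T [TVar 0; TVar 1; TConst s].

Definition t_stage : term :=
  Call (t_bpair (t_bpair (t_side t_fire 0) (t_side t_fire 1))
                (t_bpair (t_side t_cand_code 0) (t_side t_cand_code 1)))
       [Call t_snd [TVar 0]; Call t_fst [TVar 0]].

Lemma scoped_t_stage : scoped 1 t_stage = true.
Proof. vm_compute. reflexivity. Qed.

Lemma teval_t_stage p k i : teval p [npair k i] t_stage = name_of p (radius_guess p k) i.
Proof.
  unfold t_stage. rewrite teval_Call by (vm_compute; reflexivity). simpl_call.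
  rewrite teval_t_snd, teval_t_fst, nunpair_npair. cbn [fst snd].
  rewrite teval_t_bpair by (vm_compute; reflexivity). unfold name_of, bpair.
  destruct (Nat.even i);
    (rewrite teval_t_bpair by (vm_compute; reflexivity); unfold bpair;
     destruct (Nat.even (Nat.div2 i)); unfold t_side; simpl_call;
     rewrite ?teval_t_fire, ?teval_t_cand_code; reflexivity).
Qed.

Local Open Scope R_scope.

(** * Correctness of the limit *)

Lemma Rabs_le_inv a b : Rabs a <= b -> - b <= a <= b.
Proof. unfold Rabs. destruct (Rcase_abs a); intros; lra. Qed.

Definition covered (p : Baire) (y : R) : Prop := exists l, interval_contains p l y y.

Definition covered_within (p : Baire) (eps : R) (K : nat) (y : R) : Prop :=
  exists l, (l < K)%nat /\ interval_contains p l (y - eps) (y + eps).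

Lemma interval_contains_mono p l a b a' b' :
  a <= a' -> b' <= b -> interval_contains p l a b -> interval_contains p l a' b'.
Proof. intros Ha Hb (c & E & H1 & H2). exists c. split; [exact E | lra]. Qed.

Lemma covered_within_mono p eps eps' K K' y :
  eps' <= eps -> (K <= K')%nat -> covered_within p eps K y -> covered_within p eps' K' y.
Proof.
  intros He HK (l & Hl & H). exists l. split; [lia|]. revert H. apply interval_contains_mono; lra.
Qed.

Lemma covered_uniformly_near p y : covered p y ->
  exists l r, 0 < r /\ forall y', Rabs (y' - y) <= r -> interval_contains p l (y' - r) (y' + r).
Proof.
  intros (l & c & E & H1 & H2). exists l, (Rmin (y - lo_end c) (hi_end c - y) / 3). split.
  - apply Rmin_case; lra.
  - intros y' Hy'. exists c. split; [exact E|].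
    pose proof (Rmin_l (y - lo_end c) (hi_end c - y)). pose proof (Rmin_r (y - lo_end c) (hi_end c - y)).
    apply Rabs_le_inv in Hy'. lra.
Qed.

Lemma covered_within_uniform p a b : a <= b -> (forall y, a <= y <= b -> covered p y) ->
  exists eps K, 0 < eps /\ forall y, a <= y <= b -> covered_within p eps K y.
Proof.
  intros Hab Hcov.
  set (Good := fun t => a <= t <= b /\
         exists eps K, 0 < eps /\ forall y, a <= y <= t -> covered_within p eps K y).
  assert (Ga : Good a).
  { split; [lra|]. destruct (covered_uniformly_near p a (Hcov a ltac:(lra))) as (l & r & Hr & H).
    exists r, (S l). split; [exact Hr|]. intros y Hy. exists l. split; [lia|].
    apply H. rewrite Rabs_right; lra. }
  destruct (completeness Good) as [s [Hub Hlub]]; [exists b; intros t [Ht _]; lra | now exists a |].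
  assert (Has : a <= s) by now apply Hub.
  assert (Hsb : s <= b) by (apply Hlub; intros t [Ht _]; lra).
  destruct (covered_uniformly_near p s (Hcov s ltac:(lra))) as (l & r & Hr & Hl).
  assert (Ht : exists t, Good t /\ s - r < t).
  { apply NNPP. intros Hn. assert (s <= s - r); [|lra].
    apply Hlub. intros t Gt. apply Rnot_lt_le. intros Hlt. apply Hn. now exists t. }
  destruct Ht as [t [[_ (et & Kt & Het & Ht)] Hts]].
  set (t' := Rmin b (s + r)).
  assert (Gt' : Good t').
  { split; [split; [apply Rmin_case | apply Rmin_l]; lra|].
    exists (Rmin et r), (Nat.max Kt (S l)). split; [apply Rmin_case; lra|].
    intros y Hy. destruct (Rle_dec y t) as [Hyt|Hyt].
    - apply covered_within_mono with et Kt; [apply Rmin_l | lia | apply Ht; lra].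
    - pose proof (Rmin_r b (s + r)). pose proof (Rmin_r et r). pose proof (Rmin_l et r).
      exists l. split; [lia|]. apply interval_contains_mono with (y - r) (y + r); [lra | lra |].
      apply Hl, Rabs_le. unfold t' in Hy. lra. }
  assert (Hb : t' = b).
  { pose proof (Hub t' Gt'). unfold t' in *. revert H. apply Rmin_case; intros; lra. }
  destruct Gt' as [_ (e & K & He & HG)]. exists e, K. split; [exact He|].
  intros y Hy. apply HG. lra.
Qed.

Lemma small_pow2 eps n0 : 0 < eps -> exists k, (n0 <= k)%nat /\ / 2 ^ k < eps.
Proof.
  intros He. destruct (pow_lt_1_zero (/ 2)) with (y := eps) as [N HN];
    [rewrite Rabs_right; lra | exact He |].
  exists (Nat.max n0 N). split; [lia|]. specialize (HN (Nat.max n0 N) ltac:(lia)).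
  rewrite pow_inv, Rabs_right in HN; [exact HN|]. left. apply Rinv_0_lt_compat, pow2_pos.
Qed.

Lemma INR_div_pow2_nonneg n k : 0 <= INR n / 2 ^ k.
Proof. unfold Rdiv. apply Rmult_le_pos; [apply pos_INR | left; apply Rinv_0_lt_compat, pow2_pos]. Qed.

Lemma grid_last k N j : (N <= k)%nat -> INR (2 * j * 2 ^ (k - N)) / 2 ^ k = 2 * (INR j / 2 ^ N).
Proof.
  intros H. rewrite !mult_INR, INR_pow2, (pow2_sub k N H). cbn [INR].
  pose proof (pow2_pos N). pose proof (pow2_pos (k - N)). field. lra.
Qed.

Lemma ball_certified_sound p k N j y : ball_certified p k N j ->
  approx p N - INR j / 2 ^ N <= y <= approx p N + INR j / 2 ^ N -> covered p y.
Proof.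
  intros [HNk Hg] Hy. assert (Hk : 0 < / 2 ^ k) by apply Rinv_0_lt_compat, pow2_pos.
  assert (Hcells : forall g, (g <= 2 * j * 2 ^ (k - N))%nat -> forall y,
            approx p N - INR j / 2 ^ N <= y <= grid_point p k N j g -> covered p y).
  { unfold grid_point. induction g as [|g IH]; intros Hg' y' Hy'.
    - destruct (Hg 0%nat ltac:(lia)) as (l & _ & Hc). exists l. revert Hc.
      apply interval_contains_mono; unfold grid_point; cbn [INR] in *; unfold Rdiv in *; lra.
    - destruct (Rle_dec y' (approx p N - INR j / 2 ^ N + INR g / 2 ^ k)) as [Hle|Hgt];
        [apply IH; [lia | lra]|].
      destruct (Hg (S g) ltac:(lia)) as (l & _ & Hc). exists l. revert Hc.
      unfold grid_point. rewrite S_INR in *. apply interval_contains_mono; unfold Rdiv in *; lra. }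
  apply (Hcells (2 * j * 2 ^ (k - N))%nat (le_n _)). unfold grid_point. rewrite grid_last by exact HNk.
  lra.
Qed.

Lemma ball_certified_complete p N j :
  (forall y, approx p N - INR j / 2 ^ N <= y <= approx p N + INR j / 2 ^ N -> covered p y) ->
  exists k, ball_certified p k N j.
Proof.
  intros Hc.
  assert (Hj := INR_div_pow2_nonneg j N).
  destruct (covered_within_uniform p (approx p N - INR j / 2 ^ N) (approx p N + INR j / 2 ^ N)
              ltac:(lra) Hc) as (eps & K & He & HG).
  destruct (small_pow2 eps (Nat.max K N) He) as (k & Hk & Hsmall).
  exists k. split; [lia|]. intros g Hg.
  assert (Hy : approx p N - INR j / 2 ^ N <= grid_point p k N j g <= approx p N + INR j / 2 ^ N).
  { unfold grid_point.
    assert (Hg0 := INR_div_pow2_nonneg g k).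
    assert (INR g / 2 ^ k <= 2 * (INR j / 2 ^ N)).
    { rewrite <- (grid_last k N j) by lia. unfold Rdiv.
      apply Rmult_le_compat_r; [left; apply Rinv_0_lt_compat, pow2_pos | apply le_INR; lia]. }
    lra. }
  destruct (HG _ Hy) as (l & Hl & Hc'). exists l. split; [lia|].
  revert Hc'. apply interval_contains_mono; lra.
Qed.

Definition meets_ball (A : R -> Prop) (c r : R) : Prop := exists y, c - r <= y <= c + r /\ A y.

Definition is_dist (x : R) (A : R -> Prop) (d : R) : Prop :=
  (forall z, A z -> d <= Rabs (x - z)) /\ forall c, (forall z, A z -> c <= Rabs (x - z)) -> c <= d.

Lemma is_dist_exists x (A : R -> Prop) : (exists z, A z) -> exists d, is_dist x A d.
Proof.
  intros [z0 Hz0].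
  set (E := fun t => exists z, A z /\ t = - Rabs (x - z)).
  destruct (completeness E) as [m [Hub Hlub]].
  - exists 0. intros t [z [_ ->]]. pose proof (Rabs_pos (x - z)). lra.
  - exists (- Rabs (x - z0)), z0. auto.
  - exists (- m). split.
    + intros z Hz. assert (- Rabs (x - z) <= m) by (apply Hub; exists z; auto). lra.
    + intros c Hc. assert (m <= - c); [|lra]. apply Hlub. intros t [z [Hz ->]]. specialize (Hc z Hz). lra.
Qed.

Lemma finite_bound (P : nat -> nat -> Prop) :
  (forall j k k', (k <= k')%nat -> P j k -> P j k') ->
  forall J, (forall j, (j < J)%nat -> exists k, P j k) -> exists K, forall j, (j < J)%nat -> P j K.
Proof.
  intros Hm J. induction J as [|J IH]; intros H; [exists 0%nat; intros; lia|].
  destruct IH as [K HK]; [intros j Hj; apply H; lia|].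
  destruct (H J ltac:(lia)) as [k Hk]. exists (Nat.max K k). intros j Hj.
  destruct (Nat.eq_dec j J) as [->|]; [apply Hm with k; auto; lia | apply Hm with K; [lia | apply HK; lia]].
Qed.


Lemma candidate_ext p J1 J2 s m : J1 (m + 2)%nat = J2 (m + 2)%nat ->
  candidate p J1 s m = candidate p J2 s m.
Proof. intros H. unfold candidate, cand_pos, cand_neg. now rewrite H. Qed.

Lemma fire_bit_ext p J1 J2 s m : (forall m', (m' <= m)%nat -> J1 (m' + 2)%nat = J2 (m' + 2)%nat) ->
  fire_bit p J1 s m = fire_bit p J2 s m.
Proof.
  intros H.
  assert (Hx : forall m', (m' <= m)%nat -> excluded p J1 s m' <-> excluded p J2 s m')
    by (intros m' Hm'; unfold excluded; now rewrite (candidate_ext p J1 J2 s m' (H m' Hm'))).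
  assert (Hf : first_excluded p J1 s m <-> first_excluded p J2 s m).
  { unfold first_excluded. rewrite (Hx m (le_n m)).
    split; intros [H1 H2]; split; auto; intros m' Hm'; [rewrite <- Hx | rewrite Hx]; auto; lia. }
  unfold fire_bit. destruct (excluded_middle_informative (first_excluded p J1 s m)),
    (excluded_middle_informative (first_excluded p J2 s m)); tauto.
Qed.

Lemma cand_code_ext p J1 J2 s m : J1 (m + 2)%nat = J2 (m + 2)%nat ->
  cand_code p J1 s m = cand_code p J2 s m.
Proof. intros H. unfold cand_code, cand_pos, cand_neg. now rewrite H. Qed.

Lemma div2_le i : (Nat.div2 i <= i)%nat.
Proof. pose proof (Nat.div2_odd i). destruct (Nat.odd i); cbn in *; lia. Qed.

Lemma name_of_local p J1 J2 i : (forall N, (N <= i + 2)%nat -> J1 N = J2 N) ->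
  name_of p J1 i = name_of p J2 i.
Proof.
  intros H. assert (Hm : (Nat.div2 (Nat.div2 i) <= i)%nat)
    by (pose proof (div2_le i); pose proof (div2_le (Nat.div2 i)); lia).
  unfold name_of, bpair. destruct (Nat.even i), (Nat.even (Nat.div2 i));
    first [apply fire_bit_ext; intros; apply H; lia | apply cand_code_ext, H; lia].
Qed.

Lemma name_converges p J : (forall N, exists K, forall k, (K <= k)%nat -> radius_guess p k N = J N) ->
  lim (fun k => name_of p (radius_guess p k)) (name_of p J).
Proof.
  intros HJ i.
  destruct (finite_bound (fun N K => forall k, (K <= k)%nat -> radius_guess p k N = J N))
    with (J := (i + 3)%nat) as [K HK].
  { intros N K K' HKK H k Hk. apply H. lia. }
  { intros N _. apply HJ. }
  exists K. intros k Hk. apply name_of_local. intros N HN. apply HK; lia.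
Qed.

Lemma lim_unique s q q' : lim s q -> lim s q' -> forall i, q i = q' i.
Proof.
  intros H H' i. destruct (H i) as [N1 H1], (H' i) as [N2 H2].
  rewrite <- (H1 (Nat.max N1 N2)), <- (H2 (Nat.max N1 N2)); auto; lia.
Qed.

Lemma even_double n : Nat.even (2 * n) = true.
Proof. now rewrite Nat.even_mul. Qed.

Lemma even_succ_double n : Nat.even (S (2 * n)) = false.
Proof. now rewrite Nat.even_succ, Nat.odd_mul. Qed.

Ltac simpl_bpair :=
  unfold bfst, bsnd, bpair;
  repeat first [ rewrite even_double | rewrite even_succ_double
               | rewrite Nat.div2_double | rewrite Nat.div2_succ_double ].

Lemma bfst_bpair (a b : Baire) n : bfst (bpair a b) n = a n.
Proof. now simpl_bpair. Qed.

Lemma bsnd_bpair (a b : Baire) n : bsnd (bpair a b) n = b n.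
Proof. now simpl_bpair. Qed.

Definition side (b : bool) : nat := if b then 1 else 0.

Lemma name_of_parts p J y : (forall i, y i = name_of p J i) -> forall (b : bool) m,
  (if b then bsnd (bfst y) else bfst (bfst y)) m = fire_bit p J (side b) m /\
  (if b then bsnd (bsnd y) else bfst (bsnd y)) m = cand_code p J (side b) m.
Proof.
  intros Hy b m. destruct b; cbn [side]; unfold bfst, bsnd; rewrite !Hy; unfold name_of;
    simpl_bpair; split; reflexivity.
Qed.

Definition lim_flat : mvf Baire Baire := fun u v => lim (fun k i => u (npair k i)) v.

Definition llpo_select : mvf Baire Baire := fun v t =>
  exists b : bool, LLPO (bfst (bfst v), bsnd (bfst v)) b /\
    forall n, t n = (if b then bsnd (bsnd v) else bfst (bsnd v)) n.

Section Limit.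

Variables (p : Baire) (x : R) (A : R -> Prop).
Hypothesis Hx : forall N, Rabs (approx p N - x) <= / 2 ^ N.
Hypothesis HA : forall y, ~ A y <-> covered p y.
Hypothesis Hne : exists z, A z.

Lemma meets_ball_exists N : exists j, meets_ball A (approx p N) (INR j / 2 ^ N).
Proof.
  destruct Hne as [z Hz]. set (t := Rabs (z - approx p N) * 2 ^ N).
  destruct (archimed t) as [Hup _]. pose proof (pow2_pos N).
  assert (Ht : 0 <= t) by (apply Rmult_le_pos; [apply Rabs_pos | lra]).
  exists (Z.to_nat (up t)), z. split; [|exact Hz].
  assert (Habs : Rabs (z - approx p N) <= INR (Z.to_nat (up t)) / 2 ^ N).
  { rewrite INR_IZR_INZ, Z2Nat.id by (apply le_IZR; lra).
    apply Rmult_le_reg_r with (2 ^ N); [lra|]. unfold Rdiv.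
    rewrite Rmult_assoc, Rinv_l by lra. fold t. lra. }
  apply Rabs_le_inv in Habs. lra.
Qed.

Lemma radius_guess_converges N : exists J,
  (forall j, (j < J)%nat -> ~ meets_ball A (approx p N) (INR j / 2 ^ N)) /\
  meets_ball A (approx p N) (INR J / 2 ^ N) /\
  exists K, forall k, (K <= k)%nat -> radius_guess p k N = J.
Proof.
  destruct (ex_least (fun j => meets_ball A (approx p N) (INR j / 2 ^ N))) as [J [HJ Hmin]];
    [intros; apply classic | apply meets_ball_exists |].
  exists J. split; [exact Hmin|]. split; [exact HJ|].
  destruct (finite_bound (fun j k => exists k', (k' <= k)%nat /\ ball_certified p k' N j)) with (J := J)
    as [K HK].
  { intros j k k' Hkk [k1 [H1 H2]]. exists k1. split; [lia | exact H2]. }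
  { intros j Hj. destruct (ball_certified_complete p N j) as [k Hk].
    - intros y Hy. apply HA. intros Ay. apply (Hmin j Hj). now exists y.
    - exists k, k. auto. }
  exists (Nat.max K J). intros k Hk. apply radius_guess_eq; [lia | |].
  - intros k' _ Hc. destruct HJ as [y [Hy Ay]].
    exact (proj2 (HA y) (ball_certified_sound p k' N J y Hc Hy) Ay).
  - intros j Hj. destruct (HK j Hj) as [k' [Hk' Hc]]. exists k'. split; [lia | exact Hc].
Qed.

Definition is_radius (J : nat -> nat) : Prop := forall N,
  (forall j, (j < J N)%nat -> ~ meets_ball A (approx p N) (INR j / 2 ^ N)) /\
  meets_ball A (approx p N) (INR (J N) / 2 ^ N).

Lemma radius_limit : exists J, is_radius J /\
  forall N, exists K, forall k, (K <= k)%nat -> radius_guess p k N = J N.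
Proof.
  exists (fun N => proj1_sig (constructive_indefinite_description _ (radius_guess_converges N))).
  split; intros N; destruct (proj2_sig (constructive_indefinite_description _ (radius_guess_converges N)))
    as (H1 & H2 & H3); auto.
Qed.

(* [x - d] and [x + d], the only possible projection points. *)
Definition side_point (d : R) (s : nat) : R := if (s =? 0)%nat then x - d else x + d.

Lemma projection_attained d : is_dist x A d -> A (x - d) \/ A (x + d).
Proof.
  intros [Hd1 Hd2]. apply NNPP. intros Hn.
  assert (N1 : covered p (x - d)) by (apply HA; tauto).
  assert (N2 : covered p (x + d)) by (apply HA; tauto).
  destruct (covered_uniformly_near p _ N1) as (l1 & r1 & Hr1 & H1).
  destruct (covered_uniformly_near p _ N2) as (l2 & r2 & Hr2 & H2).
  assert (Hr : 0 < Rmin r1 r2) by (apply Rmin_case; lra).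
  assert (d + Rmin r1 r2 <= d); [|lra].
  apply Hd2. intros z Hz. apply Rnot_lt_le. intros Hlt. pose proof (Hd1 z Hz) as Hdz.
  pose proof (Rmin_l r1 r2). pose proof (Rmin_r r1 r2).
  apply (proj2 (HA z)); [|exact Hz]. destruct (Rle_dec z x).
  - exists l1. apply interval_contains_mono with (z - r1) (z + r1); [lra | lra |].
    apply H1, Rabs_le. rewrite Rabs_right in Hlt, Hdz by lra. lra.
  - exists l2. apply interval_contains_mono with (z - r2) (z + r2); [lra | lra |].
    apply H2, Rabs_le. rewrite Rabs_left in Hlt, Hdz by lra. lra.
Qed.

Lemma radius_estimate J d N : is_radius J -> is_dist x A d ->
  Rabs (d - INR (J N) / 2 ^ N) <= 2 / 2 ^ N.
Proof.
  intros HJ [Hd1 Hd2]. destruct (HJ N) as [Hmin [y [Hy Ay]]].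
  assert (P : 0 < / 2 ^ N) by apply Rinv_0_lt_compat, pow2_pos.
  pose proof (Rabs_le_inv _ _ (Hx N)) as HxN.
  assert (Up : d <= / 2 ^ N + INR (J N) / 2 ^ N) by (specialize (Hd1 y Ay); split_Rabs; lra).
  assert (Lo : INR (J N) / 2 ^ N - 2 / 2 ^ N <= d).
  { destruct (J N) as [|j'].
    - assert (0 <= d) by (apply Hd2; intros; apply Rabs_pos). cbn [INR]. unfold Rdiv. lra.
    - apply Hd2. intros z Hz.
      assert (Hnz : ~ (approx p N - INR j' / 2 ^ N <= z <= approx p N + INR j' / 2 ^ N))
        by (intros Hin; apply (Hmin j' ltac:(lia)); now exists z).
      rewrite S_INR. unfold Rdiv in *. rewrite Rmult_plus_distr_r, Rmult_1_l.
      destruct (Rle_dec z x); split_Rabs; try lra;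
        apply Rnot_lt_le; intros Hc; apply Hnz; split; lra. }
  apply Rabs_le. unfold Rdiv in *. lra.
Qed.

Lemma candidate_close J d s m : is_radius J -> is_dist x A d ->
  Rabs (candidate p J s m - side_point d s) <= 3 / 2 ^ (m + 2).
Proof.
  intros HJ Hd. pose proof (Rabs_le_inv _ _ (radius_estimate J d (m + 2) HJ Hd)) as HB.
  pose proof (Rabs_le_inv _ _ (Hx (m + 2)%nat)) as HxN.
  rewrite candidate_eq. unfold side_point. apply Rabs_le.
  destruct (s =? 0)%nat; unfold Rdiv in *; lra.
Qed.

Lemma pow2_plus2 m : 2 ^ (m + 2) = 4 * 2 ^ m.
Proof. rewrite pow_add. cbn. lra. Qed.

Lemma excluded_sound J s m y :
  Rabs (candidate p J s m - y) <= 3 / 2 ^ (m + 2) -> excluded p J s m -> ~ A y.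
Proof.
  intros Hv (l & _ & H). apply HA. exists l. revert H. apply interval_contains_mono;
    rewrite pow2_plus2 in Hv; apply Rabs_le_inv in Hv; pose proof (pow2_pos m);
    unfold Rdiv in *; rewrite Rinv_mult in Hv; pose proof (Rinv_0_lt_compat _ (pow2_pos m)); lra.
Qed.

Lemma excluded_complete J s y :
  (forall m, Rabs (candidate p J s m - y) <= 3 / 2 ^ (m + 2)) -> ~ A y -> exists m, excluded p J s m.
Proof.
  intros Hv Hn. apply HA in Hn. destruct (covered_uniformly_near p y Hn) as (l & r & Hr & Hl).
  destruct (small_pow2 (r / 2) l ltac:(lra)) as [m [Hm Hs]].
  exists m, l. split; [lia|].
  specialize (Hv m). rewrite pow2_plus2 in Hv. apply Rabs_le_inv in Hv.
  pose proof (Rinv_0_lt_compat _ (pow2_pos m)). unfold Rdiv in Hv. rewrite Rinv_mult in Hv.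
  apply interval_contains_mono with (candidate p J s m - r) (candidate p J s m + r); try lra.
  apply Hl, Rabs_le. lra.
Qed.

Lemma fire_bit_first J s m : fire_bit p J s m <> 0%nat -> first_excluded p J s m.
Proof. unfold fire_bit. destruct (excluded_middle_informative _); [auto | congruence]. Qed.

Lemma fire_bits_at_most_one J d (b b' : bool) m m' : is_radius J -> is_dist x A d ->
  fire_bit p J (side b) m <> 0%nat -> fire_bit p J (side b') m' <> 0%nat -> b = b' /\ m = m'.
Proof.
  intros HJ Hd H1 H2. apply fire_bit_first in H1 as [D1 M1]. apply fire_bit_first in H2 as [D2 M2].
  assert (Hout : forall b m, excluded p J (side b) m -> ~ A (side_point d (side b)))
    by (intros b0 m0; apply excluded_sound, candidate_close; assumption).
  assert (b = b') as <-.
  { apply Hout in D1. apply Hout in D2. destruct (projection_attained d Hd), b, b'; cbn in *; tauto. }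
  split; [reflexivity|]. destruct (lt_eq_lt_dec m m') as [[Hlt | ->] | Hgt];
    [exact (False_ind _ (M2 m Hlt D1)) | reflexivity | exact (False_ind _ (M1 m' Hgt D2))].
Qed.

Lemma fire_bits_zero J d b : is_radius J -> is_dist x A d ->
  (forall m, fire_bit p J (side b) m = 0%nat) -> A (side_point d (side b)).
Proof.
  intros HJ Hd Hz. apply NNPP. intros Hn.
  destruct (ex_least (excluded p J (side b))) as [m [Hm Hmin]]; [intros; apply classic | |].
  - eapply excluded_complete; [|exact Hn]. intros m. now apply candidate_close.
  - specialize (Hz m). unfold fire_bit in Hz. destruct (excluded_middle_informative _) as [_|HF];
      [discriminate | now apply HF].
Qed.

Lemma cand_code_cauchy J d s : is_radius J -> is_dist x A d ->
  rep_cauchy (cand_code p J s) (side_point d s).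
Proof.
  intros HJ Hd n. fold (qval (cand_code p J s n)). unfold cand_code.
  rewrite qval_qcode by apply cand_den_pos. fold (candidate p J s n).
  eapply Rle_trans; [now apply candidate_close|]. rewrite pow2_plus2.
  pose proof (pow2_pos n). unfold Rdiv. rewrite Rinv_mult.
  pose proof (Rinv_0_lt_compat _ (pow2_pos n)). lra.
Qed.

Lemma side_point_proj d s : is_dist x A d -> A (side_point d s) -> Proj (x, A) (side_point d s).
Proof.
  intros [Hd1 Hd2] Hs. assert (0 <= d) by (apply Hd2; intros; apply Rabs_pos).
  split; [exact Hne|]. split; [exact Hs|]. intros z Hz. specialize (Hd1 z Hz).
  unfold side_point. destruct (s =? 0)%nat; split_Rabs; lra.
Qed.


Lemma llpo_of_name J d y b : is_radius J -> is_dist x A d -> (forall i, y i = name_of p J i) ->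
  (forall m, fire_bit p J (side b) m = 0%nat) -> LLPO (bfst (bfst y), bsnd (bfst y)) b.
Proof.
  intros HJ Hd Hy Hz. pose proof (name_of_parts p J y Hy) as Hparts. split; cbn [fst snd].
  - intros j j' m m' H1 H2. rewrite (proj1 (Hparts j m)) in H1. rewrite (proj1 (Hparts j' m')) in H2.
    exact (fire_bits_at_most_one J d j j' m m' HJ Hd H1 H2).
  - intros m. now rewrite (proj1 (Hparts b m)).
Qed.

Lemma name_llpo_domain J d y : is_radius J -> is_dist x A d -> (forall i, y i = name_of p J i) ->
  mdom llpo_select y.
Proof.
  intros HJ Hd Hy. enough (Hb : exists b, forall m, fire_bit p J (side b) m = 0%nat).
  { destruct Hb as [b Hb]. exists (if b then bsnd (bsnd y) else bfst (bsnd y)), b.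
    split; [now apply (llpo_of_name J d) | reflexivity]. }
  destruct (classic (forall m, fire_bit p J (side false) m = 0%nat)) as [H0 | H0]; [now exists false|].
  exists true. intros m. apply not_all_ex_not in H0 as [m0 Hm0].
  destruct (Nat.eq_dec (fire_bit p J (side true) m) 0) as [E | E]; [exact E|].
  now destruct (fire_bits_at_most_one J d false true m0 m HJ Hd Hm0 E).
Qed.

Lemma name_llpo_answer J d y b : is_radius J -> is_dist x A d -> (forall i, y i = name_of p J i) ->
  LLPO (bfst (bfst y), bsnd (bfst y)) b ->
  rep_cauchy (if b then bsnd (bsnd y) else bfst (bsnd y)) (side_point d (side b)) /\
  Proj (x, A) (side_point d (side b)).
Proof.
  intros HJ Hd Hy [_ Hz]. pose proof (name_of_parts p J y Hy) as Hparts. split.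
  - intros n. rewrite (proj2 (Hparts b n)). exact (cand_code_cauchy J d (side b) HJ Hd n).
  - apply side_point_proj; [exact Hd|]. apply (fire_bits_zero J d b HJ Hd).
    intros m. rewrite <- (proj1 (Hparts b m)). apply Hz.
Qed.

End Limit.

Local Open Scope nat_scope.

(** * The Weihrauch reductions *)

Lemma WRed_of_terms {X Y Z W} (dX : rep X) (dY : rep Y) (dZ : rep Z) (dW : rep W)
    (f : mvf X Y) (g : mvf Z W) (tK tH : term) :
  scoped 1 tK = true -> scoped 1 tH = true ->
  (forall G, realizer dZ dW g G -> forall p x, dX p x -> mdom f x ->
     let k := fun n => teval p [n] tK in
     pdom G k /\ exists y, dY (fun n => teval (bpair p (pval G k)) [n] tH) y /\ f x y) ->
  WRed dX dY dZ dW f g.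
Proof.
  intros HK HH Hspec.
  destruct (term_associate tK HK) as [aK [cK EK]], (term_associate tH HH) as [aH [cH EH]].
  exists aK, aH. split; [exact cK|]. split; [exact cH|].
  intros G HG p x Hp Hx. destruct (Hspec G HG p x Hp Hx) as [Hd Hy]. eauto 7.
Qed.

Definition t_bfst : term := TOrc (TMul (TConst 2) (TVar 0)).
Definition t_bsnd : term := TOrc (TAdd (TMul (TConst 2) (TVar 0)) (TConst 1)).

Lemma teval_t_bsnd_bpair (p q : Baire) n : teval (bpair p q) [n] t_bsnd = q n.
Proof. cbn. rewrite Nat.add_1_r. apply bsnd_bpair. Qed.

Lemma lim_flat_le_lim : WRed rep_baire rep_baire rep_baire_seq rep_baire lim_flat lim.
Proof.
  apply WRed_of_terms with (TOrc (TVar 0)) t_bsnd; [reflexivity | reflexivity |].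
  intros G HG p u Hpu Hdom k.
  destruct (HG k (fun a i => u (npair a i)) (fun a i => Hpu _) Hdom) as [Hdk (y & Hy & Hly)].
  split; [exact Hdk|]. exists y. split; [|exact Hly].
  intros n. rewrite teval_t_bsnd_bpair. apply Hy.
Qed.

(* Reads the LLPO answer [b] at position [0] of the oracle's half and copies the
   half of the input it selects: positions [4n+3] or [4n+1], i.e. [8n+6] or [8n+2]. *)
Definition t_select : term :=
  TIf (TOrc (TConst 1)) (TOrc (TAdd (TMul (TConst 8) (TVar 0)) (TConst 6)))
                        (TOrc (TAdd (TMul (TConst 8) (TVar 0)) (TConst 2))).

Lemma llpo_select_le_LLPO :
  WRed rep_baire rep_baire (rep_prod rep_baire rep_baire) rep_bool llpo_select LLPO.
Proof.
  apply WRed_of_terms with t_bfst t_select; [reflexivity | reflexivity |].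
  intros G HG p v Hpv [t [b [Hll Ht]]] k.
  assert (Hk : rep_prod rep_baire rep_baire k (bfst (bfst v), bsnd (bfst v))).
  { split; intros n; cbn; unfold bfst, bsnd; rewrite Hpv; f_equal; lia. }
  destruct (HG k _ Hk (ex_intro _ b Hll)) as [Hdk (b' & Hb' & Hll')].
  split; [exact Hdk|]. exists (if b' then bsnd (bsnd v) else bfst (bsnd v)). split.
  - intros n. cbn [t_select teval nth]. change (bpair p (pval G k) 1) with (pval G k 0).
    rewrite Hb'. unfold bsnd, bfst. destruct b'; cbn [Nat.eqb].
    + replace (8 * n + 6) with (2 * (4 * n + 3)) by lia.
      change (bpair p (pval G k) (2 * (4 * n + 3))) with (bfst (bpair p (pval G k)) (4 * n + 3)).
      rewrite bfst_bpair, Hpv. f_equal. lia.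
    + replace (8 * n + 2) with (2 * (4 * n + 1)) by lia.
      change (bpair p (pval G k) (2 * (4 * n + 1))) with (bfst (bpair p (pval G k)) (4 * n + 1)).
      rewrite bfst_bpair, Hpv. f_equal. lia.
  - exists b'. now split.
Qed.

Lemma covered_iff_closed_neg p (A : R -> Prop) :
  rep_closed_neg (bsnd p) A -> forall y, ~ A y <-> covered p y.
Proof.
  intros H y. rewrite (H y). unfold covered, interval_contains, in_interval, lo_end, hi_end, qval, bsnd.
  split.
  - intros (n & c & E & Hi). exists n, c. rewrite Nat.add_1_r. destruct (nunpair c). auto.
  - intros (n & c & E & Hi). exists n, c. rewrite Nat.add_1_r in E. destruct (nunpair c). auto.
Qed.

Lemma Proj_le_llpo_select_lim_flat :
  WRed (rep_prod rep_cauchy rep_closed_neg) rep_cauchy rep_baire rep_baire Proj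
    (mcomp llpo_select lim_flat).
Proof.
  apply WRed_of_terms with t_stage t_bsnd; [exact scoped_t_stage | reflexivity |].
  intros G HG p [x A] [Hx HA0] Hdom k. cbn [fst snd] in Hx, HA0.
  pose proof (covered_iff_closed_neg p A HA0) as HA.
  assert (Hne : exists z, A z) by (destruct Hdom as [y [Hz _]]; exact Hz).
  destruct (radius_limit p A HA Hne) as [J [HJ Hconv]].
  destruct (is_dist_exists x A Hne) as [d Hd].
  assert (Hlim : forall y, lim_flat k y <-> forall i, y i = name_of p J i).
  { assert (Hq : lim_flat k (name_of p J)).
    { intros i. destruct (name_converges p J Hconv i) as [K HK]. exists K.
      intros k' Hk'. unfold k. rewrite teval_t_stage. auto. }
    split; [intros Hy; exact (lim_unique _ _ _ Hy Hq)|].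
    intros Hy i. destruct (Hq i) as [K HK]. exists K. intros k' Hk'. rewrite Hy. auto. }
  assert (Hmd : mdom (mcomp llpo_select lim_flat) k).
  { destruct (name_llpo_domain p x A Hx HA J d (name_of p J) HJ Hd (fun _ => eq_refl)) as [t Ht].
    exists t. split.
    - intros y Hy. apply (name_llpo_domain p x A Hx HA J d y HJ Hd), (proj1 (Hlim y)), Hy.
    - exists (name_of p J). split; [now apply (proj2 (Hlim _)) | exact Ht]. }
  destruct (HG k k (fun _ => eq_refl) Hmd) as [Hdk (t & Ht & _ & y & Hy & b & Hll & Hsel)].
  pose proof (proj1 (Hlim y) Hy) as Hyq.
  destruct (name_llpo_answer p x A Hx HA Hne J d y b HJ Hd Hyq Hll) as [Hc Hp].
  split; [exact Hdk|]. exists (side_point x d (side b)). split; [|exact Hp].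
  intros n. rewrite teval_t_bsnd_bpair, Ht, Hsel. apply Hc.
Qed.

Lemma rep_baire_is_rep : is_rep rep_baire.
Proof.
  split.
  - intros p x y H1 H2. apply functional_extensionality. intros n. now rewrite <- H1, <- H2.
  - intros x. now exists x.
Qed.

Theorem proposition4p10 :
  WRed_cprod (rep_prod rep_cauchy rep_closed_neg) rep_cauchy
    rep_baire_seq rep_baire
    (rep_prod rep_baire rep_baire) rep_bool
    Proj LLPO lim.
Proof.
  exists Baire, Baire, Baire, rep_baire, rep_baire, rep_baire, lim_flat, llpo_select.
  repeat split; try apply rep_baire_is_rep.
  - exact lim_flat_le_lim.
  - exact llpo_select_le_LLPO.
  - exact Proj_le_llpo_select_lim_flat.
Qed.
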